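(* Let $p/q\in\mathcal S$. There exists a lattice $\Lambda_{p,q}\in C(p,q)$ such that: (1) $|\Lambda_{p,q}|=\min\{|\Lambda|:\Lambda\in C(p,q)\}=\sqrt q$; (2) $\det(\Lambda_{p,q})=\min\{\det(\Lambda):\Lambda\in C(p,q)\}=p$; (3) the norm form of $\Lambda_{p,q}$ with respect to a minimal basis (a basis consisting of two minimal vectors) is $Q_{p,q}(x,y)=qx^2+2xy\sqrt{q^2-p^2}+qy^2$; (4) for every $\Lambda\in C(p,q)$ there is $U\in O_2(\mathbb R)$ with $\Lambda=\sqrt{\det(\Lambda)/p}\,U\Lambda_{p,q}$, so that $\frac{\det(\Lambda)}{p}Q_{p,q}(x,y)$ is the norm form of $\Lambda$ with respect to a minimal basis; (5) for every $\Lambda\in C(p,q)$ and $\Re(s)>1$, $E_\Lambda(s)=\left(\frac{p}{\det\Lambda}\right)^s\sum'_{(x,y)\in\mathbb Z^2}Q_{p,q}(x,y)^{-s}$, and hence for each real $s>1$, $\Lambda_{p,q}$ maximizes $E_\Lambda(s)$ over $\Lambda\in C(p,q)$. Such a lattice $\Lambda_{p,q}$ is unique up to rotation by an orthogonal matrix with rational entries.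
   Context: All lattices are full-rank lattices in $\mathbb R^2$. For a lattice $\Lambda$, $|\Lambda|=\min_{x\in\Lambda\setminus\{0\}}\|x\|$ (Euclidean norm) and $S(\Lambda)=\{x\in\Lambda:\|x\|=|\Lambda|\}$; $\Lambda$ is well-rounded (WR) if $S(\Lambda)$ spans $\mathbb R^2$. $\mathrm{WR}(\mathbb Z^2)$ is the set of full-rank WR sublattices of $\mathbb Z^2$. For a WR lattice $\Lambda$, $\theta(\Lambda)\in[\pi/3,\pi/2]$ is the angle between two linearly independent minimal vectors chosen so that the angle is at most $\pi/2$; equivalently $\sin\theta(\Lambda)=\det(\Lambda)/|\Lambda|^2$. For $q\in\mathbb Z_{>0}$ let $\mathcal S_q=\{p/q\in\mathbb Q\cap(\sqrt3/2,1):\gcd(p,q)=1,\ \sqrt{q^2-p^2}\in\mathbb Z\}$ and $\mathcal S=\bigcup_{q}\mathcal S_q\cup\{1\}$, where $1$ is written as $p/q$ with $p=q=1$; elements of $\mathcal S$ are written in lowest terms. For $p/q\in\mathcal S$, $C(p,q)=\{\Lambda\in\mathrm{WR}(\mathbb Z^2):\sin\theta(\Lambda)=p/q\}$. The Epstein zeta function of a lattice $\Lambda$ is $E_\Lambda(s)=\sum'_{x\in\Lambda}\|x\|^{-2s}$, where $\sum'$ denotes summation over $(\Lambda\setminus\{0\})/\{\pm1\}$ (similarly $\sum'_{(x,y)\in\mathbb Z^2}$ sums over $(\mathbb Z^2\setminus\{0\})/\{\pm1\}$). *)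

From Stdlib Require Import Reals Lra Lia ZArith Arith List QArith Qreals ClassicalEpsilon.
Open Scope R_scope.

Definition vec : Type := (R * R)%type.
Definition v0 : vec := (0, 0).
Definition vadd (u v : vec) : vec := (fst u + fst v, snd u + snd v).
Definition vscale (c : R) (v : vec) : vec := (c * fst v, c * snd v).
Definition norm2 (v : vec) : R := fst v ^ 2 + snd v ^ 2.
Definition norm (v : vec) : R := sqrt (norm2 v).
Definition det2 (u v : vec) : R := fst u * snd v - snd u * fst v.

Record mat2 : Type := Mat2 { m11 : R; m12 : R; m21 : R; m22 : R }.
Definition mapply (U : mat2) (v : vec) : vec :=
  (m11 U * fst v + m12 U * snd v, m21 U * fst v + m22 U * snd v).
Definition orthogonal (U : mat2) : Prop :=
  m11 U ^ 2 + m21 U ^ 2 = 1 /\ m12 U ^ 2 + m22 U ^ 2 = 1 /\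
  m11 U * m12 U + m21 U * m22 U = 0.
Definition rational_mat (U : mat2) : Prop :=
  exists a b c d : Q, m11 U = Q2R a /\ m12 U = Q2R b /\ m21 U = Q2R c /\ m22 U = Q2R d.

Definition is_basis (L : vec -> Prop) (b1 b2 : vec) : Prop :=
  det2 b1 b2 <> 0 /\
  forall v, L v <-> exists m n : Z, v = vadd (vscale (IZR m) b1) (vscale (IZR n) b2).
Definition is_lattice (L : vec -> Prop) : Prop := exists b1 b2, is_basis L b1 b2.

(** det(L) = |det(b1,b2)| for a basis (independent of the basis) *)
Definition lat_det (L : vec -> Prop) : R :=
  epsilon (inhabits 0) (fun d => exists b1 b2, is_basis L b1 b2 /\ d = Rabs (det2 b1 b2)).

Definition is_min_norm (L : vec -> Prop) (r : R) : Prop :=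
  (exists v, L v /\ v <> v0 /\ norm v = r) /\
  (forall v, L v -> v <> v0 -> r <= norm v).
Definition lat_min (L : vec -> Prop) : R := epsilon (inhabits 0) (is_min_norm L).

Definition minimal_vec (L : vec -> Prop) (v : vec) : Prop :=
  L v /\ v <> v0 /\ norm v = lat_min L.
Definition minimal_basis (L : vec -> Prop) (b1 b2 : vec) : Prop :=
  is_basis L b1 b2 /\ minimal_vec L b1 /\ minimal_vec L b2.

Definition well_rounded (L : vec -> Prop) : Prop :=
  is_lattice L /\ exists u v, minimal_vec L u /\ minimal_vec L v /\ det2 u v <> 0.
Definition sub_Z2 (L : vec -> Prop) : Prop :=
  forall v, L v -> exists m n : Z, v = (IZR m, IZR n).
Definition WR_Z2 (L : vec -> Prop) : Prop := well_rounded L /\ sub_Z2 L.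

Definition sin_theta (L : vec -> Prop) : R := lat_det L / (lat_min L ^ 2).

Definition C_pq (p q : nat) (L : vec -> Prop) : Prop :=
  WR_Z2 L /\ sin_theta L = INR p / INR q.

Definition in_S (p q : nat) : Prop :=
  (p = 1%nat /\ q = 1%nat) \/
  ((0 < q)%nat /\ Nat.gcd p q = 1%nat /\
   (exists r : nat, (r * r + p * p = q * q)%nat) /\
   sqrt 3 / 2 < INR p / INR q < 1).

Definition Qpq (p q : nat) (x y : R) : R :=
  INR q * x ^ 2 + 2 * x * y * sqrt (INR q ^ 2 - INR p ^ 2) + INR q * y ^ 2.

(** * Complex numbers as pairs (re, im) *)
Definition C : Type := (R * R)%type.
Definition Cadd (z w : C) : C := (fst z + fst w, snd z + snd w).
Definition Csub (z w : C) : C := (fst z - fst w, snd z - snd w).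
Definition Cmul (z w : C) : C :=
  (fst z * fst w - snd z * snd w, fst z * snd w + snd z * fst w).
Definition Copp (z : C) : C := (- fst z, - snd z).
Definition Cnorm (z : C) : R := sqrt (fst z ^ 2 + snd z ^ 2).
(** a^s = exp(s ln a) for real a > 0 and complex s *)
Definition Cpow_pos (a : R) (s : C) : C :=
  (exp (fst s * ln a) * cos (snd s * ln a), exp (fst s * ln a) * sin (snd s * ln a)).
Definition Csum {T : Type} (f : T -> C) (l : list T) : C :=
  fold_right (fun x acc => Cadd (f x) acc) (0, 0) l.

(** Unordered (net) summation: the family f indexed by {x | A x} is summable
    with sum S (limit over finite subsets). *)
Definition has_usum {T : Type} (A : T -> Prop) (f : T -> C) (S : C) : Prop :=
  forall eps, 0 < eps ->
  exists F0 : list T, (forall x, In x F0 -> A x) /\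
    forall F : list T, NoDup F -> (forall x, In x F -> A x) ->
      (forall x, In x F0 -> In x F) -> Cnorm (Csub (Csum f F) S) < eps.

(** E_L(s) = E : sum over (L \ 0)/{±1} of |x|^(-2s), i.e. half the sum over L \ 0. *)
Definition epstein_sum (L : vec -> Prop) (s E : C) : Prop :=
  has_usum (fun v => L v /\ v <> v0) (fun v => Cpow_pos (norm2 v) (Copp s)) (Cmul (2, 0) E).

(** F = sum' over (Z^2 \ 0)/{±1} of Q_{p,q}(x,y)^(-s) *)
Definition Q_sum (p q : nat) (s F : C) : Prop :=
  has_usum (fun z : Z * Z => z <> (0%Z, 0%Z))
    (fun z => Cpow_pos (Qpq p q (IZR (fst z)) (IZR (snd z))) (Copp s)) (Cmul (2, 0) F).

Definition thm_props (p q : nat) (L0 : vec -> Prop) : Prop :=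
  C_pq p q L0 /\
  (lat_min L0 = sqrt (INR q) /\ forall L, C_pq p q L -> sqrt (INR q) <= lat_min L) /\
  (lat_det L0 = INR p /\ forall L, C_pq p q L -> INR p <= lat_det L) /\
  (exists b1 b2, minimal_basis L0 b1 b2 /\
     forall x y : R, norm2 (vadd (vscale x b1) (vscale y b2)) = Qpq p q x y) /\
  (forall L, C_pq p q L ->
     (exists U, orthogonal U /\
        forall v, L v <-> exists w, L0 w /\
          v = vscale (sqrt (lat_det L / INR p)) (mapply U w)) /\
     (exists b1 b2, minimal_basis L b1 b2 /\
        forall x y : R, norm2 (vadd (vscale x b1) (vscale y b2))
                        = lat_det L / INR p * Qpq p q x y)) /\
  (forall L, C_pq p q L -> forall s : C, 1 < fst s ->
     exists E F, epstein_sum L s E /\ Q_sum p q s F /\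
       E = Cmul (Cpow_pos (INR p / lat_det L) s) F) /\
  (forall s : R, 1 < s -> forall L, C_pq p q L -> forall E E0,
     epstein_sum L (s, 0) E -> epstein_sum L0 (s, 0) E0 -> fst E <= fst E0).

(** Let p/q be in S and r = sqrt (q^2 - p^2), so that (p, r, q) is a primitive
    Pythagorean triple with 2 r <= q.  The proof has three ingredients.

    - Arithmetic.  Euclid's parametrisation of (p, r, q) writes q as a sum of
      two squares and produces integral vectors b1, b2 with |b1|^2 = |b2|^2 = q
      and b1.b2 = r; then |det (b1, b2)| = p by Lagrange's identity, and we put
      Lambda_{p,q} = Z b1 + Z b2.
    - Geometry.  Two independent minimal vectors of a lattice form a basis
      (Lagrange reduction).  For L in C(p,q), such a basis (u, v) of integral
      vectors satisfies |det| q = p |u|^2, and gcd (p, q) = 1 forces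
      |u|^2 = q t, |det| = p t, u.v = r t for an integer t >= 1: the Gram matrix
      of L is t times that of Lambda_{p,q}.  This gives (1)-(4), the orthogonal
      map b_i |-> u_i / sqrt t, and uniqueness (t = 1 gives a rational map).
    - Analysis.  Absolutely summable families are summable in the unordered
      sense; comparing Q_{p,q}(x,y)^(-s) with (1+|x|)^(-s) (1+|y|)^(-s) gives
      convergence for Re s > 1, and reindexing the Epstein sum by the basis
      (u, v) gives E_L(s) = t^(-s) sum' Q_{p,q}^(-s), hence (5). *)

From Stdlib Require Import Reals QArith Qreals.
From Stdlib Require Import Lra Lia ZArith Znumtheory List Permutation Wf_nat
  Classical ClassicalEpsilon.
Open Scope R_scope.

(** * Pythagorean triples and sums of two squares *)

Open Scope Z_scope.

Lemma rel_prime_sq (x y : Z) : Z.gcd x y = 1 -> Z.gcd (x * x) (y * y) = 1.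
Proof.
  intro H. apply Zgcd_1_rel_prime in H. apply Zgcd_1_rel_prime.
  apply rel_prime_sym, rel_prime_mult; apply rel_prime_sym, rel_prime_mult; auto.
Qed.

Lemma gcd_sq (x y : Z) : Z.gcd (x * x) (y * y) = Z.gcd x y * Z.gcd x y.
Proof.
  destruct (Z.eq_dec (Z.gcd x y) 0) as [H0|H0].
  - apply Z.gcd_eq_0 in H0 as [-> ->]. reflexivity.
  - set (g := Z.gcd x y) in *.
    destruct (Z.gcd_divide_l x y) as [x' Hx]. destruct (Z.gcd_divide_r x y) as [y' Hy].
    fold g in Hx, Hy.
    assert (Hg : Z.gcd x' y' = 1).
    { pose proof (Z.gcd_div_gcd x y g H0 eq_refl) as Hd.
      rewrite Hx, Hy, !Z.div_mul in Hd by exact H0. exact Hd. }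
    rewrite Hx, Hy.
    replace (x' * g * (x' * g)) with ((g * g) * (x' * x')) by ring.
    replace (y' * g * (y' * g)) with ((g * g) * (y' * y')) by ring.
    rewrite Z.gcd_mul_mono_l, rel_prime_sq by exact Hg.
    rewrite Z.abs_eq by nia. ring.
Qed.

Lemma twice_square_factor (A B e : Z) :
  0 <= A -> A * B = e * e -> Z.gcd A B = 2 -> (2 | e) -> exists M, A = 2 * (M * M) /\ 0 <= M.
Proof.
  intros HA HAB HG He.
  set (g := Z.gcd A e).
  assert (Hgg : g * g = 2 * A).
  { unfold g. rewrite <- gcd_sq, <- HAB, Z.gcd_mul_mono_l, HG, Z.abs_eq by lia. ring. }
  assert (H2 : (2 | g)).
  { apply Z.gcd_greatest; [rewrite <- HG; apply Z.gcd_divide_l | exact He]. }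
  pose proof (Z.gcd_nonneg A e) as Hg0. fold g in Hg0.
  destruct H2 as [M HM]. exists M. split; [nia | lia].
Qed.

Lemma pyth_param (o e q : Z) : 0 <= o -> 0 <= e -> 0 < q -> Z.Even e ->
  o * o + e * e = q * q -> Z.gcd o q = 1 ->
  exists M N, M * M + N * N = q /\ M * M - N * N = o /\ 2 * M * N = e.
Proof.
  intros Ho He Hq [c Hc] Hpy Hg.
  (* o and q are both odd, so q + o and q - o are even *)
  assert (Hhalf : exists a b, q + o = 2 * a /\ q - o = 2 * b).
  { destruct (Z.Even_or_Odd o) as [[a Ha]|[a Ha]];
      destruct (Z.Even_or_Odd q) as [[b Hb]|[b Hb]]; subst.
    - exists (b + a), (b - a). lia.
    - exfalso. assert (2 * (2*a*a + 2*c*c - 2*b*b - 2*b) = 1) by lia. lia.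
    - exfalso. assert (2 * (2*a*a + 2*a + 2*c*c - 2*b*b) = -1) by lia. lia.
    - exists (b + a + 1), (b - a). lia. }
  destruct Hhalf as [a [b [HA HB]]].
  assert (HAB : (q + o) * (q - o) = e * e) by nia.
  assert (HG : Z.gcd (q + o) (q - o) = 2).
  { apply Z.divide_antisym_nonneg; [apply Z.gcd_nonneg | lia | |].
    - assert (H1 : (Z.gcd (q + o) (q - o) | 2 * q)).
      { replace (2 * q) with ((q + o) + (q - o)) by ring.
        apply Z.divide_add_r; [apply Z.gcd_divide_l | apply Z.gcd_divide_r]. }
      assert (H2 : (Z.gcd (q + o) (q - o) | 2 * o)).
      { replace (2 * o) with ((q + o) - (q - o)) by ring.
        apply Z.divide_sub_r; [apply Z.gcd_divide_l | apply Z.gcd_divide_r]. }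
      pose proof (Z.gcd_greatest _ _ _ H1 H2) as H3.
      rewrite Z.gcd_mul_mono_l, (Z.gcd_comm q o), Hg in H3. exact H3.
    - apply Z.gcd_greatest; [rewrite HA | rewrite HB]; apply Z.divide_factor_l. }
  assert (He2 : (2 | e)) by (rewrite Hc; apply Z.divide_factor_l).
  assert (Hoq : o <= q) by nia.
  destruct (twice_square_factor (q + o) (q - o) e ltac:(lia) HAB HG He2) as [M [HM HM0]].
  destruct (twice_square_factor (q - o) (q + o) e ltac:(lia) ltac:(lia)
              ltac:(rewrite Z.gcd_comm; exact HG) He2) as [N [HN HN0]].
  exists M, N. split; [lia|]. split; [lia|].
  assert (E2 : e * e = (2 * M * N) * (2 * M * N)) by nia.
  assert (0 <= 2 * M * N) by nia. nia.
Qed.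

Lemma nat_gcd_Z (p q : nat) : (0 < p)%nat -> Nat.gcd p q = 1%nat ->
  Z.gcd (Z.of_nat p) (Z.of_nat q) = 1.
Proof.
  intros Hp Hg. destruct (Nat.gcd_bezout_pos p q Hp) as [a [b Hab]].
  rewrite Hg in Hab.
  apply Z.divide_1_r_nonneg; [apply Z.gcd_nonneg|].
  assert (E : 1 = Z.of_nat a * Z.of_nat p - Z.of_nat b * Z.of_nat q) by lia.
  rewrite E. apply Z.divide_sub_r; apply Z.divide_mul_r;
    [apply Z.gcd_divide_l | apply Z.gcd_divide_r].
Qed.

(** This is the arithmetic input
    for the lattice Lambda_{p,q}: via Gaussian integers, Q = M^2 + N^2. *)
Lemma pyth_gram_vectors (P Q R : Z) : 0 < P -> 0 < Q -> 0 <= R ->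
  R * R + P * P = Q * Q -> Z.gcd P Q = 1 ->
  exists a1 a2 c1 c2 : Z, a1 * a1 + a2 * a2 = Q /\ c1 * c1 + c2 * c2 = Q /\ a1 * c1 + a2 * c2 = R.
Proof.
  intros HP HQ HR Hpy Hg.
  assert (HgR : Z.gcd R Q = 1).
  { apply Z.divide_1_r_nonneg; [apply Z.gcd_nonneg|].
    rewrite <- (rel_prime_sq Q P) by (rewrite Z.gcd_comm; exact Hg).
    apply Z.gcd_greatest.
    - apply Z.divide_mul_l, Z.gcd_divide_r.
    - replace (P * P) with (Q * Q - R * R) by lia.
      apply Z.divide_sub_r; apply Z.divide_mul_l; [apply Z.gcd_divide_r | apply Z.gcd_divide_l]. }
  destruct (Z.Even_or_Odd P) as [HPe|HPo].
  - destruct (pyth_param R P Q HR ltac:(lia) HQ HPe Hpy HgR) as [M [N [H1 [H2 H3]]]].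
    exists M, (-N), M, N. repeat split; lia.
  - (* P odd: then R is even, as two odd squares cannot sum to a square *)
    assert (HRe : Z.Even R).
    { destruct (Z.Even_or_Odd R) as [H|[b Hb]]; auto. exfalso. destruct HPo as [a Ha].
      destruct (Z.Even_or_Odd Q) as [[c Hc]|[c Hc]]; subst.
      - assert (4 * (b*b + b + a*a + a - c*c) = -2) by nia. lia.
      - assert (4 * (b*b + b + a*a + a - c*c - c) = -1) by nia. lia. }
    destruct (pyth_param P R Q ltac:(lia) HR HQ HRe ltac:(lia) Hg) as [M [N [H1 [H2 H3]]]].
    exists M, (-N), N, (-M). repeat split; lia.
Qed.

Lemma coprime_scaling (p q k N : Z) : 0 < p -> 0 < q -> 0 < N -> Z.gcd p q = 1 ->
  Z.abs k * q = p * N -> exists t, 1 <= t /\ N = q * t /\ Z.abs k = p * t.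
Proof.
  intros Hp Hq HN Hg E.
  assert (Hdiv : (q | p * N)) by (rewrite <- E; apply Z.divide_mul_r, Z.divide_refl).
  apply Z.gauss in Hdiv; [|rewrite Z.gcd_comm; exact Hg].
  destruct Hdiv as [t Ht]. exists t. subst N.
  split; [nia|]. split; [ring|].
  apply (Z.mul_reg_r _ _ q); lia.
Qed.

Close Scope Z_scope.

(** * Plane vectors and lattices *)

Definition dot (u v : vec) : R := fst u * fst v + snd u * snd v.

Definition intvec (v : vec) : Prop := exists m n : Z, v = (IZR m, IZR n).

Definition vec_eq_dec (x y : vec) : {x = y} + {x <> y}.
Proof. decide equality; apply Req_EM_T. Defined.

Lemma vec_eq (a b : vec) : fst a = fst b -> snd a = snd b -> a = b.
Proof. destruct a, b; simpl; intros; subst; reflexivity. Qed.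

Lemma norm2_nonneg v : 0 <= norm2 v.
Proof. unfold norm2. nra. Qed.

Lemma norm2_Z (a b : Z) : norm2 (IZR a, IZR b) = IZR (a * a + b * b).
Proof. unfold norm2; simpl. rewrite plus_IZR, !mult_IZR. ring. Qed.

Lemma norm2_comb x y b1 b2 : norm2 (vadd (vscale x b1) (vscale y b2)) =
  x * x * norm2 b1 + y * y * norm2 b2 + 2 * x * y * dot b1 b2.
Proof. unfold norm2, dot, vadd, vscale; simpl; ring. Qed.

Lemma det_comb a b c d b1 b2 :
  det2 (vadd (vscale a b1) (vscale b b2)) (vadd (vscale c b1) (vscale d b2))
  = (a * d - b * c) * det2 b1 b2.
Proof. unfold det2, vadd, vscale; simpl; ring. Qed.

Lemma lagrange_identity u v : dot u v * dot u v + det2 u v * det2 u v = norm2 u * norm2 v.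
Proof. unfold dot, det2, norm2; ring. Qed.

Lemma det_nz_l u v : det2 u v <> 0 -> u <> v0.
Proof. intros H ->. apply H. unfold det2, v0; simpl. ring. Qed.

Lemma det_nz_r u v : det2 u v <> 0 -> v <> v0.
Proof. intros H ->. apply H. unfold det2, v0; simpl. ring. Qed.

Lemma basis_in1 L b1 b2 : is_basis L b1 b2 -> L b1.
Proof. intros [_ H]. apply H. exists 1%Z, 0%Z. apply vec_eq; unfold vadd, vscale; simpl; ring. Qed.

Lemma basis_in2 L b1 b2 : is_basis L b1 b2 -> L b2.
Proof. intros [_ H]. apply H. exists 0%Z, 1%Z. apply vec_eq; unfold vadd, vscale; simpl; ring. Qed.

Lemma lattice_comb L b1 b2 a c : is_basis L b1 b2 -> L a -> L c -> forall m n : Z,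
  L (vadd (vscale (IZR m) a) (vscale (IZR n) c)).
Proof.
  intros [_ HL] Ha Hc m n.
  apply HL in Ha as [m1 [n1 ->]]. apply HL in Hc as [m2 [n2 ->]]. apply HL.
  exists (m * m1 + n * m2)%Z, (m * n1 + n * n2)%Z.
  unfold vadd, vscale; simpl. rewrite !plus_IZR, !mult_IZR. f_equal; ring.
Qed.

Lemma lattice_neg L v : is_lattice L -> L v -> L (vscale (-1) v).
Proof.
  intros [c1 [c2 Hc]] Lv.
  replace (vscale (-1) v) with (vadd (vscale (IZR (-1)) v) (vscale (IZR 0) v)).
  - exact (lattice_comb L c1 c2 v v Hc Lv Lv (-1) 0).
  - apply vec_eq; unfold vadd, vscale; simpl; ring.
Qed.

(** Two bases of the same lattice differ by a matrix in GL_2(Z), so |det| agrees. *)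
Lemma basis_det_eq L b1 b2 c1 c2 : is_basis L b1 b2 -> is_basis L c1 c2 ->
  Rabs (det2 b1 b2) = Rabs (det2 c1 c2).
Proof.
  intros Hb Hc. pose proof Hb as [Db HB]. pose proof Hc as [_ HC].
  destruct (proj1 (HB c1) (basis_in1 L c1 c2 Hc)) as [a [b E1]].
  destruct (proj1 (HB c2) (basis_in2 L c1 c2 Hc)) as [c [d E2]].
  destruct (proj1 (HC b1) (basis_in1 L b1 b2 Hb)) as [a' [b' F1]].
  destruct (proj1 (HC b2) (basis_in2 L b1 b2 Hb)) as [c' [d' F2]].
  assert (K1 : det2 c1 c2 = IZR (a * d - b * c) * det2 b1 b2).
  { rewrite E1, E2, det_comb, minus_IZR, !mult_IZR. reflexivity. }
  assert (K2 : det2 b1 b2 = IZR (a' * d' - b' * c') * det2 c1 c2).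
  { rewrite F1, F2, det_comb, minus_IZR, !mult_IZR. reflexivity. }
  set (k := (a * d - b * c)%Z) in *. set (k' := (a' * d' - b' * c')%Z) in *.
  assert (K3 : (IZR k' * IZR k - 1) * det2 b1 b2 = 0) by (rewrite K1 in K2; lra).
  apply Rmult_integral in K3 as [K3|K3]; [|contradiction].
  assert (K4 : (k * k' = 1)%Z) by (apply eq_IZR; rewrite mult_IZR; simpl; lra).
  assert (Hk : Rabs (IZR k) = 1).
  { rewrite <- abs_IZR. apply Z.eq_mul_1 in K4 as [-> | ->]; reflexivity. }
  rewrite K1, Rabs_mult, Hk. ring.
Qed.

Lemma lat_det_basis L b1 b2 : is_basis L b1 b2 -> lat_det L = Rabs (det2 b1 b2).
Proof.
  intro Hb. unfold lat_det.
  destruct (epsilon_spec (inhabits 0)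
    (fun d => exists b1 b2, is_basis L b1 b2 /\ d = Rabs (det2 b1 b2))) as [c1 [c2 [Hc ->]]].
  { exists (Rabs (det2 b1 b2)), b1, b2. auto. }
  apply (basis_det_eq L); auto.
Qed.

Lemma lat_min_spec L : (exists r, is_min_norm L r) -> is_min_norm L (lat_min L).
Proof. intro H. unfold lat_min. apply epsilon_spec. exact H. Qed.

Lemma lat_min_eq L r : is_min_norm L r -> lat_min L = r.
Proof.
  intro H. destruct (lat_min_spec L (ex_intro _ r H)) as [[v1 [H1 [N1 E1]]] A1].
  destruct H as [[v2 [H2 [N2 E2]]] A2].
  specialize (A1 v2 H2 N2). specialize (A2 v1 H1 N1). lra.
Qed.

(** A sublattice of Z^2 with a nonzero vector attains its minimum, since
    squared norms of its vectors are natural numbers. *)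
Lemma min_exists_Z2 L : sub_Z2 L -> (exists v, L v /\ v <> v0) -> exists r, is_min_norm L r.
Proof.
  intros HZ [v [Hv Hv0]].
  set (P := fun k : nat => exists w, L w /\ w <> v0 /\ norm2 w = INR k).
  assert (HP : forall w, L w -> exists k, norm2 w = INR k).
  { intros w Lw. destruct (HZ w Lw) as [m [n ->]]. exists (Z.to_nat (m * m + n * n)).
    rewrite norm2_Z, INR_IZR_INZ, Z2Nat.id by nia. reflexivity. }
  destruct (dec_inh_nat_subset_has_unique_least_element P (fun n => classic (P n)))
    as [k0 [[[w0 [Lw0 [Nw0 Ew0]]] Hk0] _]].
  { destruct (HP v Hv) as [k Hk]. exists k, v. auto. }
  exists (sqrt (INR k0)). split.
  - exists w0. unfold norm. rewrite Ew0. auto.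
  - intros w Lw Nw. destruct (HP w Lw) as [k Ek]. unfold norm. rewrite Ek.
    apply sqrt_le_1_alt, le_INR, Hk0. exists w; auto.
Qed.

Lemma int_quadratic_bound (m n : Z) : (m <> 0 \/ n <> 0)%Z -> (1 <= m * m + n * n - Z.abs (m * n))%Z.
Proof. intros H. destruct (Z.abs_spec (m * n)) as [[_ E]|[_ E]]; rewrite E; nia. Qed.

Lemma reduced_basis_min L b1 b2 N : is_basis L b1 b2 -> norm2 b1 = N -> norm2 b2 = N ->
  2 * Rabs (dot b1 b2) <= N -> is_min_norm L (sqrt N).
Proof.
  intros Hb E1 E2 Hd. split.
  - exists b1. split; [eapply basis_in1; eauto|]. split; [destruct Hb; eapply det_nz_l; eauto|].
    unfold norm; rewrite E1; auto.
  - intros v Lv Nv. pose proof Hb as [_ HB]. apply HB in Lv as [m [n ->]].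
    unfold norm. apply sqrt_le_1_alt. rewrite norm2_comb, E1, E2.
    assert (Hmn : (m <> 0 \/ n <> 0)%Z).
    { destruct (Z.eq_dec m 0) as [->|]; destruct (Z.eq_dec n 0) as [->|]; auto. exfalso.
      apply Nv, vec_eq; unfold vadd, vscale, v0; simpl; ring. }
    apply int_quadratic_bound, IZR_le in Hmn.
    rewrite minus_IZR, plus_IZR, !mult_IZR, abs_IZR, mult_IZR, Rabs_mult in Hmn.
    assert (HN : 0 <= N) by (rewrite <- E1; apply norm2_nonneg).
    assert (K : Rabs (2 * IZR m * IZR n * dot b1 b2) <= Rabs (IZR m) * Rabs (IZR n) * N).
    { rewrite !Rabs_mult, (Rabs_right 2) by lra.
      replace (2 * Rabs (IZR m) * Rabs (IZR n) * Rabs (dot b1 b2)) with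
        (Rabs (IZR m) * Rabs (IZR n) * (2 * Rabs (dot b1 b2))) by ring.
      apply Rmult_le_compat_l; auto. apply Rmult_le_pos; apply Rabs_pos. }
    pose proof (Rle_abs (- (2 * IZR m * IZR n * dot b1 b2))) as K2.
    rewrite Rabs_Ropp in K2. nra.
Qed.

Lemma small_coeff_norm a b N d : -1/2 <= a <= 1/2 -> -1/2 <= b <= 1/2 -> 0 < N -> d * d < N * N ->
  a * a * N + b * b * N + 2 * a * b * d < N.
Proof.
  intros Ha Hb HN Hd.
  assert (Hd' : -N < d < N) by nra.
  assert (a * a <= 1/4) by nra. assert (b * b <= 1/4) by nra.
  destruct (Rtotal_order (a * b) 0) as [Hab|[Hab|Hab]].
  - assert (- (a * b) <= 1/4) by nra.
    assert (2 * a * b * d < -2 * a * b * N) by nra. nra.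
  - replace (2 * a * b * d) with (2 * (a * b) * d) by ring. rewrite Hab. nra.
  - assert (a * b <= 1/4) by nra.
    assert (2 * a * b * d < 2 * a * b * N) by nra. nra.
Qed.

Lemma round_Z x : exists k : Z, -1/2 <= x - IZR k < 1/2.
Proof. destruct (archimed (x - 1/2)) as [H1 H2]. exists (up (x - 1/2)). lra. Qed.

(** Two linearly independent minimal vectors of a lattice form a basis: any
    lattice vector, reduced modulo them, becomes strictly shorter than the
    minimum, hence zero. *)
Lemma minimal_pair_basis L r u v : is_lattice L -> is_min_norm L r -> L u -> L v ->
  norm u = r -> norm v = r -> det2 u v <> 0 -> is_basis L u v.
Proof.
  intros [c1 [c2 Hc]] [_ Hmin] Lu Lv Nu Nv D. split; auto.
  intro w. split.
  - intro Lw.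
    set (N := norm2 u).
    assert (NvN : norm2 v = N).
    { apply sqrt_inj; try apply norm2_nonneg. unfold N. change (norm v = norm u). congruence. }
    assert (HN : 0 < N).
    { destruct (norm2_nonneg u) as [|E]; [auto|]. exfalso. apply (det_nz_l u v D).
      unfold N, norm2 in *. apply vec_eq; unfold v0; simpl; nra. }
    set (al := det2 w v / det2 u v). set (be := det2 u w / det2 u v).
    destruct (round_Z al) as [k1 Hk1]. destruct (round_Z be) as [k2 Hk2].
    set (w' := vadd (vscale (IZR 1) w) (vscale (IZR 1) (vadd (vscale (IZR (- k1)) u)
                                                          (vscale (IZR (- k2)) v)))).
    assert (Lw' : L w') by (apply (lattice_comb L c1 c2); auto; apply (lattice_comb L c1 c2); auto).
    assert (Ew' : w' = vadd (vscale (al - IZR k1) u) (vscale (be - IZR k2) v)).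
    { unfold w', al, be, det2. rewrite !opp_IZR.
      apply vec_eq; unfold vadd, vscale; simpl; field; exact D. }
    assert (Hlt : norm2 w' < N).
    { rewrite Ew', norm2_comb, NvN. apply small_coeff_norm; try lra.
      pose proof (lagrange_identity u v) as HL. rewrite NvN in HL. fold N in HL.
      assert (0 < det2 u v * det2 u v) by (apply Rsqr_pos_lt; exact D).
      nra. }
    assert (W0 : w' = v0).
    { apply NNPP. intro Hne. specialize (Hmin w' Lw' Hne).
      rewrite <- Nu in Hmin. unfold norm in Hmin.
      apply sqrt_le_0 in Hmin; try apply norm2_nonneg. fold N in Hmin. lra. }
    exists k1, k2. unfold w', v0 in W0. rewrite !opp_IZR in W0.
    injection W0. intros. apply vec_eq; unfold vadd, vscale in *; simpl in *; lra.
  - intros [m [n ->]]. apply (lattice_comb L c1 c2); auto.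
Qed.

(** * Orthogonal maps between bases with proportional Gram matrices *)

(** The matrix of the linear map sending b1 to u / s and b2 to v / s. *)
Definition transfer_mat (b1 b2 u v : vec) (s : R) : mat2 :=
  let D := det2 b1 b2 * s in
  Mat2 ((fst u * snd b2 - fst v * snd b1) / D) ((fst v * fst b1 - fst u * fst b2) / D)
       ((snd u * snd b2 - snd v * snd b1) / D) ((snd v * fst b1 - snd u * fst b2) / D).

Lemma transfer_mat_apply b1 b2 u v s x y : det2 b1 b2 <> 0 -> s <> 0 ->
  mapply (transfer_mat b1 b2 u v s) (vadd (vscale x b1) (vscale y b2)) =
  vscale (/ s) (vadd (vscale x u) (vscale y v)).
Proof.
  intros D Hs. destruct b1 as [b1x b1y], b2 as [b2x b2y], u as [u1 u2], v as [v1 v2].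
  unfold mapply, transfer_mat, vadd, vscale, det2 in *; simpl in *.
  apply vec_eq; simpl; field; auto.
Qed.

(** If the Gram matrix of (u, v) is t times that of (b1, b2), the map
    b_i |-> u_i / sqrt t preserves the Gram matrix, hence is orthogonal. *)
Lemma transfer_mat_orthogonal b1 b2 u v t : det2 b1 b2 <> 0 -> 0 < t ->
  norm2 u = t * norm2 b1 -> norm2 v = t * norm2 b2 -> dot u v = t * dot b1 b2 ->
  orthogonal (transfer_mat b1 b2 u v (sqrt t)).
Proof.
  intros D Ht Nu Nv Duv.
  assert (Hs : sqrt t * sqrt t = t) by (apply sqrt_sqrt; lra).
  assert (Hs0 : sqrt t <> 0) by (apply Rgt_not_eq, sqrt_lt_R0; auto).
  destruct b1 as [b1x b1y], b2 as [b2x b2y], u as [u1 u2], v as [v1 v2].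
  unfold orthogonal, transfer_mat, norm2, dot, det2 in *; cbn [fst snd m11 m12 m21 m22] in *.
  set (s := sqrt t) in *. set (DD := b1x * b2y - b1y * b2x) in *.
  split; [|split].
  - replace (((u1 * b2y - v1 * b1y) / (DD * s)) ^ 2 + ((u2 * b2y - v2 * b1y) / (DD * s)) ^ 2)
      with (((u1 ^ 2 + u2 ^ 2) * b2y ^ 2 + (v1 ^ 2 + v2 ^ 2) * b1y ^ 2
             - 2 * (u1 * v1 + u2 * v2) * b1y * b2y) / (DD * DD * (s * s))) by (field; auto).
    rewrite Nu, Nv, Duv, Hs. unfold DD. field. split; [lra|auto].
  - replace (((v1 * b1x - u1 * b2x) / (DD * s)) ^ 2 + ((v2 * b1x - u2 * b2x) / (DD * s)) ^ 2)
      with (((u1 ^ 2 + u2 ^ 2) * b2x ^ 2 + (v1 ^ 2 + v2 ^ 2) * b1x ^ 2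
             - 2 * (u1 * v1 + u2 * v2) * b1x * b2x) / (DD * DD * (s * s))) by (field; auto).
    rewrite Nu, Nv, Duv, Hs. unfold DD. field. split; [lra|auto].
  - replace ((u1 * b2y - v1 * b1y) / (DD * s) * ((v1 * b1x - u1 * b2x) / (DD * s)) +
             (u2 * b2y - v2 * b1y) / (DD * s) * ((v2 * b1x - u2 * b2x) / (DD * s)))
      with (((u1 * v1 + u2 * v2) * (b2y * b1x + b1y * b2x) - (u1 ^ 2 + u2 ^ 2) * b2y * b2x
             - (v1 ^ 2 + v2 ^ 2) * b1y * b1x) / (DD * DD * (s * s))) by (field; auto).
    rewrite Nu, Nv, Duv, Hs. unfold DD. field. split; [lra|auto].
Qed.

Lemma Q2R_ratio (m d : Z) : d <> 0%Z -> exists a : Q, IZR m / IZR d = Q2R a.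
Proof.
  intro H. exists (inject_Z m / inject_Z d)%Q. rewrite Q2R_div.
  - unfold Q2R, inject_Z; simpl. field. apply not_0_IZR; auto.
  - unfold Qeq, inject_Z; simpl. lia.
Qed.

Lemma transfer_mat_rational b1 b2 u v : intvec b1 -> intvec b2 -> intvec u -> intvec v ->
  det2 b1 b2 <> 0 -> rational_mat (transfer_mat b1 b2 u v 1).
Proof.
  intros [a1 [a2 ->]] [c1 [c2 ->]] [u1 [u2 ->]] [v1 [v2 ->]] D.
  set (dz := (a1 * c2 - a2 * c1)%Z).
  assert (ED : det2 (IZR a1, IZR a2) (IZR c1, IZR c2) * 1 = IZR dz).
  { unfold det2, dz; simpl. rewrite minus_IZR, !mult_IZR. ring. }
  assert (Dz : dz <> 0%Z) by (intro E; apply D; rewrite <- (Rmult_1_r (det2 _ _)), ED, E; reflexivity).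
  unfold rational_mat, transfer_mat. cbn zeta. rewrite ED. cbn [m11 m12 m21 m22 fst snd].
  rewrite <- !mult_IZR, <- !minus_IZR.
  destruct (Q2R_ratio (u1 * c2 - v1 * a2) dz Dz) as [x0 ->].
  destruct (Q2R_ratio (v1 * a1 - u1 * c1) dz Dz) as [x1 ->].
  destruct (Q2R_ratio (u2 * c2 - v2 * a2) dz Dz) as [x2 ->].
  destruct (Q2R_ratio (v2 * a1 - u2 * c1) dz Dz) as [x3 ->].
  exists x0, x1, x2, x3. auto.
Qed.

(** * Unordered sums of complex families *)

Definition l1norm (z : C) : R := Rabs (fst z) + Rabs (snd z).

Definition rsum {T} (f : T -> R) (l : list T) : R := fold_right (fun x acc => f x + acc) 0 l.

Lemma l1norm_nonneg z : 0 <= l1norm z.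
Proof. unfold l1norm. pose proof (Rabs_pos (fst z)). pose proof (Rabs_pos (snd z)). lra. Qed.

Lemma Cnorm_le_l1norm z : Cnorm z <= l1norm z.
Proof.
  unfold Cnorm, l1norm. pose proof (Rabs_pos (fst z)). pose proof (Rabs_pos (snd z)).
  rewrite <- (sqrt_pow2 (Rabs (fst z) + Rabs (snd z))) by lra.
  apply sqrt_le_1_alt. rewrite <- (pow2_abs (fst z)), <- (pow2_abs (snd z)). nra.
Qed.

Lemma Cnorm_mul z w : Cnorm (Cmul z w) = Cnorm z * Cnorm w.
Proof. unfold Cnorm, Cmul; simpl. rewrite <- sqrt_mult by nra. f_equal. ring. Qed.

Lemma Cnorm_sub_sym a b : Cnorm (Csub a b) = Cnorm (Csub b a).
Proof. unfold Cnorm, Csub; simpl. f_equal. ring. Qed.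

Lemma Cnorm_sub_tri a b c : Cnorm (Csub a c) <= Cnorm (Csub a b) + Cnorm (Csub b c).
Proof.
  unfold Cnorm, Csub; cbn [fst snd].
  set (x1 := fst a - fst b). set (y1 := snd a - snd b).
  set (x2 := fst b - fst c). set (y2 := snd b - snd c).
  replace (fst a - fst c) with (x1 + x2) by (unfold x1, x2; ring).
  replace (snd a - snd c) with (y1 + y2) by (unfold y1, y2; ring).
  pose proof (sqrt_pos (x1 ^ 2 + y1 ^ 2)) as P1. pose proof (sqrt_pos (x2 ^ 2 + y2 ^ 2)) as P2.
  rewrite <- (sqrt_pow2 (sqrt (x1 ^ 2 + y1 ^ 2) + sqrt (x2 ^ 2 + y2 ^ 2))) by lra.
  apply sqrt_le_1_alt.
  assert (E1 : sqrt (x1^2+y1^2) * sqrt (x1^2+y1^2) = x1^2+y1^2) by (apply sqrt_sqrt; nra).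
  assert (E2 : sqrt (x2^2+y2^2) * sqrt (x2^2+y2^2) = x2^2+y2^2) by (apply sqrt_sqrt; nra).
  assert (CS : x1 * x2 + y1 * y2 <= sqrt (x1 ^ 2 + y1 ^ 2) * sqrt (x2 ^ 2 + y2 ^ 2)).
  { destruct (Rle_lt_dec (x1 * x2 + y1 * y2) 0); [nra|].
    apply Rsqr_incr_0_var; [|apply Rmult_le_pos; auto]. unfold Rsqr.
    replace (sqrt (x1^2+y1^2) * sqrt (x2^2+y2^2) * (sqrt (x1^2+y1^2) * sqrt (x2^2+y2^2)))
      with ((sqrt (x1^2+y1^2) * sqrt (x1^2+y1^2)) * (sqrt (x2^2+y2^2) * sqrt (x2^2+y2^2)))
      by ring.
    rewrite E1, E2. pose proof (pow2_ge_0 (x1 * y2 - x2 * y1)). nra. }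
  nra.
Qed.

Lemma Cnorm_zero z : (forall eps, 0 < eps -> Cnorm z < eps) -> z = (0, 0).
Proof.
  intro H. destruct z as [a b]. unfold Cnorm in H; cbn [fst snd] in H.
  assert (a ^ 2 + b ^ 2 = 0).
  { apply NNPP; intro Hne.
    assert (Hpos : 0 < a ^ 2 + b ^ 2) by (pose proof (pow2_ge_0 a); pose proof (pow2_ge_0 b); lra).
    specialize (H (sqrt (a ^ 2 + b ^ 2)) (sqrt_lt_R0 _ Hpos)). lra. }
  assert (a = 0) by nra. assert (b = 0) by nra. subst; auto.
Qed.

Section UnorderedSums.

Context {T : Type}.

Lemma rsum_nonneg (f : T -> R) l : (forall x, 0 <= f x) -> 0 <= rsum f l.
Proof. intro H. induction l; simpl; [lra|]. pose proof (H a); lra. Qed.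

Lemma rsum_app (f : T -> R) l1 l2 : rsum f (l1 ++ l2) = rsum f l1 + rsum f l2.
Proof. induction l1; simpl; [lra|]. rewrite IHl1; ring. Qed.

Lemma rsum_le (f g : T -> R) l : (forall x, In x l -> f x <= g x) -> rsum f l <= rsum g l.
Proof.
  induction l; simpl; intros H; [lra|].
  pose proof (H a (or_introl eq_refl)). assert (rsum f l <= rsum g l) by auto. lra.
Qed.

Lemma rsum_scal (f : T -> R) c l : rsum (fun x => c * f x) l = c * rsum f l.
Proof. induction l; simpl; [ring|]. rewrite IHl; ring. Qed.

Lemma rsum_ext (f g : T -> R) l : (forall x, In x l -> f x = g x) -> rsum f l = rsum g l.
Proof. induction l; simpl; intros H; auto. rewrite H, IHl; auto. Qed.

Lemma Csum_app (g : T -> C) l1 l2 : Csum g (l1 ++ l2) = Cadd (Csum g l1) (Csum g l2).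
Proof.
  induction l1; simpl; [unfold Cadd; destruct (Csum g l2); simpl; f_equal; ring|].
  rewrite IHl1. unfold Cadd; simpl; f_equal; ring.
Qed.

Lemma Csum_perm (g : T -> C) l1 l2 : Permutation l1 l2 -> Csum g l1 = Csum g l2.
Proof.
  induction 1; simpl; try congruence.
  unfold Cadd; simpl; f_equal; ring.
Qed.

Lemma Csum_scal (g : T -> C) c l : Csum (fun x => Cmul c (g x)) l = Cmul c (Csum g l).
Proof.
  induction l; simpl; [unfold Cmul; simpl; f_equal; ring|].
  rewrite IHl. unfold Cmul, Cadd; simpl; f_equal; ring.
Qed.

Lemma l1norm_Csum (g : T -> C) l : l1norm (Csum g l) <= rsum (fun x => l1norm (g x)) l.
Proof.
  induction l; simpl; [unfold l1norm; simpl; rewrite Rabs_R0; lra|].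
  unfold l1norm, Cadd in *; simpl.
  pose proof (Rabs_triang (fst (g a)) (fst (Csum g l))).
  pose proof (Rabs_triang (snd (g a)) (snd (Csum g l))). lra.
Qed.

Lemma Csum_fst_nonneg (g : T -> C) l : (forall x, In x l -> 0 <= fst (g x)) -> 0 <= fst (Csum g l).
Proof.
  induction l; simpl; intros H; [lra|]. unfold Cadd; simpl.
  pose proof (H a (or_introl eq_refl)). assert (0 <= fst (Csum g l)) by auto. lra.
Qed.

Variable T_eq_dec : forall x y : T, {x = y} + {x <> y}.

Lemma rsum_incl (f : T -> R) F G :
  (forall x, 0 <= f x) -> NoDup F -> (forall x, In x F -> In x G) -> rsum f F <= rsum f G.
Proof.
  intros Hf HF. revert G. induction HF as [|a F HaF HF IH]; intros G HG; simpl.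
  - apply rsum_nonneg; auto.
  - assert (Ha : In a G) by (apply HG; left; auto).
    assert (K : f a + rsum f (remove T_eq_dec a G) <= rsum f G).
    { clear -Ha Hf. induction G as [|b G IHG]; simpl in *; [contradiction|].
      destruct (T_eq_dec a b) as [->|Hne].
      - assert (rsum f (remove T_eq_dec b G) <= rsum f G).
        { clear -Hf. induction G; simpl; [lra|].
          destruct (T_eq_dec b a); simpl; pose proof (Hf a); lra. }
        lra.
      - destruct Ha as [Ha|Ha]; [congruence|]. simpl. specialize (IHG Ha). lra. }
    assert (rsum f F <= rsum f (remove T_eq_dec a G)).
    { apply IH. intros x Hx. apply in_in_remove; [intros ->; contradiction | apply HG; right; auto]. }
    lra.
Qed.

Lemma Csum_split (A : T -> Prop) (g : T -> C) (F G : list T) :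
  NoDup F -> NoDup G -> (forall x, In x G -> In x F) -> (forall x, In x F -> A x) ->
  exists Rl, NoDup Rl /\ (forall x, In x Rl -> A x) /\ (forall x, In x Rl -> ~ In x G) /\
    Csum g F = Cadd (Csum g G) (Csum g Rl).
Proof.
  intros HF HG HGF HA.
  set (out := fun x => if in_dec T_eq_dec x G then false else true).
  assert (Hout : forall x, In x (filter out F) -> ~ In x G).
  { intros x Hx. apply filter_In in Hx as [_ Hx]. unfold out in Hx.
    destruct (in_dec T_eq_dec x G); congruence. }
  exists (filter out F). split; [apply NoDup_filter; auto|].
  split; [intros x Hx; apply filter_In in Hx as [Hx _]; auto|]. split; [exact Hout|].
  rewrite <- Csum_app. apply Csum_perm, NoDup_Permutation; auto.
  - apply NoDup_app; auto. apply NoDup_filter; auto. intros a Ha Hb. exact (Hout a Hb Ha).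
  - intro x. rewrite in_app_iff, filter_In. unfold out. split.
    + intro Hx. destruct (in_dec T_eq_dec x G); auto.
    + intros [Hx|[Hx _]]; auto.
Qed.

Lemma usum_unique A (g : T -> C) S1 S2 : has_usum A g S1 -> has_usum A g S2 -> S1 = S2.
Proof.
  intros H1 H2.
  assert (Csub S1 S2 = (0, 0)).
  { apply Cnorm_zero. intros eps Heps.
    destruct (H1 (eps / 2)) as [F1 [A1 B1]]; [lra|]. destruct (H2 (eps / 2)) as [F2 [A2 B2]]; [lra|].
    set (F := nodup T_eq_dec (F1 ++ F2)).
    assert (HF : NoDup F) by apply NoDup_nodup.
    assert (HA : forall x, In x F -> A x).
    { intros x Hx. apply nodup_In, in_app_iff in Hx as [Hx|Hx]; auto. }
    assert (K1 : Cnorm (Csub (Csum g F) S1) < eps / 2).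
    { apply B1; auto. intros. apply nodup_In, in_app_iff; auto. }
    assert (K2 : Cnorm (Csub (Csum g F) S2) < eps / 2).
    { apply B2; auto. intros. apply nodup_In, in_app_iff; auto. }
    pose proof (Cnorm_sub_tri S1 (Csum g F) S2) as Htri.
    rewrite (Cnorm_sub_sym S1 (Csum g F)) in Htri. lra. }
  destruct S1, S2. unfold Csub in H; simpl in H. injection H; intros. f_equal; lra.
Qed.

Lemma usum_fst_nonneg A (g : T -> C) S :
  has_usum A g S -> (forall x, A x -> 0 <= fst (g x)) -> 0 <= fst S.
Proof.
  intros H Hg. apply Rnot_lt_le. intro Hneg.
  destruct (H (- fst S)) as [F0 [HA HB]]; [lra|].
  set (F := nodup T_eq_dec F0).
  assert (K : Cnorm (Csub (Csum g F) S) < - fst S).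
  { apply HB; [apply NoDup_nodup | intros x Hx; apply HA, (nodup_In T_eq_dec); auto |
      intros; apply nodup_In; auto]. }
  assert (P : 0 <= fst (Csum g F)).
  { apply Csum_fst_nonneg. intros x Hx. apply Hg, HA, (nodup_In T_eq_dec); auto. }
  assert (Hre : Rabs (fst (Csub (Csum g F) S)) <= Cnorm (Csub (Csum g F) S)).
  { generalize (Csub (Csum g F) S). intro z. unfold Cnorm.
    rewrite <- (sqrt_pow2 (Rabs (fst z))) by apply Rabs_pos. apply sqrt_le_1_alt.
    rewrite pow2_abs. pose proof (pow2_ge_0 (snd z)). lra. }
  pose proof (Rle_abs (fst (Csub (Csum g F) S))). simpl in *. lra.
Qed.

End UnorderedSums.

Lemma rsum_map {T U} (f : U -> R) (h : T -> U) l : rsum f (map h l) = rsum (fun x => f (h x)) l.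
Proof. induction l; simpl; auto. rewrite IHl; auto. Qed.

Lemma usum_scale {T} (A : T -> Prop) g S c :
  has_usum A g S -> has_usum A (fun x => Cmul c (g x)) (Cmul c S).
Proof.
  intros Hs eps Heps. set (nc := Cnorm c).
  assert (Hc : 0 <= nc) by apply sqrt_pos.
  destruct (Hs (eps / (nc + 1))) as [F0 [HF0 HF0']]; [apply Rdiv_lt_0_compat; lra|].
  exists F0. split; auto. intros F HND HFA HF. rewrite Csum_scal.
  replace (Csub (Cmul c (Csum g F)) (Cmul c S)) with (Cmul c (Csub (Csum g F) S))
    by (unfold Cmul, Csub; simpl; f_equal; ring).
  rewrite Cnorm_mul. fold nc. specialize (HF0' F HND HFA HF).
  set (nd := Cnorm (Csub (Csum g F) S)) in *.
  assert (Hd : 0 <= nd) by apply sqrt_pos.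
  apply (Rmult_lt_compat_r (nc + 1)) in HF0'; [|lra].
  replace (eps / (nc + 1) * (nc + 1)) with eps in HF0' by (field; lra).
  nra.
Qed.

Lemma lift_list {T U} (phi : T -> U) (A : T -> Prop) (F' : list U) :
  (forall y, In y F' -> exists x, A x /\ phi x = y) ->
  exists F, map phi F = F' /\ forall x, In x F -> A x.
Proof.
  induction F' as [|y F' IH]; intros H.
  - exists nil. split; auto. intros x [].
  - destruct (H y (or_introl eq_refl)) as [x [Ax Ex]].
    destruct IH as [F [E1 E2]]; [intros; apply H; right; auto|].
    exists (x :: F). split; [simpl; congruence|]. intros z [<-|Hz]; auto.
Qed.

Lemma usum_reindex {T U} (A : T -> Prop) (A' : U -> Prop) (phi : T -> U) g g' S :
  (forall x y, A x -> A y -> phi x = phi y -> x = y) -> (forall x, A x -> A' (phi x)) ->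
  (forall y, A' y -> exists x, A x /\ phi x = y) -> (forall x, A x -> g' (phi x) = g x) ->
  has_usum A g S -> has_usum A' g' S.
Proof.
  intros Hinj HA Hsur Hg Hs eps Heps. destruct (Hs eps Heps) as [F0 [HF0 HF0']].
  exists (map phi F0). split; [intros y Hy; apply in_map_iff in Hy as [x [<- Hx]]; auto|].
  intros F' HND HF' Hincl.
  destruct (lift_list phi A F') as [F [<- HFA]]; [intros y Hy; apply Hsur; auto|].
  assert (Hsum : Csum g' (map phi F) = Csum g F).
  { clear -Hg HFA. induction F as [|x F IH]; simpl; auto.
    rewrite Hg by (apply HFA; left; auto).
    rewrite IH by (intros; apply HFA; right; auto). reflexivity. }
  rewrite Hsum. apply HF0'; auto; [eapply NoDup_map_inv; eauto|].
  intros x Hx. assert (Hm : In (phi x) (map phi F)) by (apply Hincl, in_map; auto).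
  apply in_map_iff in Hm as [y [Ey Hy]]. rewrite (Hinj x y); auto.
Qed.

(** * Absolutely summable families are summable *)

Lemma lim_bound (u : nat -> R) l N a b :
  Un_cv u l -> (forall n, (N <= n)%nat -> Rabs (u n - a) <= b) -> Rabs (l - a) <= b.
Proof.
  intros Hu Hb. apply Rnot_lt_le. intro H.
  destruct (Hu (Rabs (l - a) - b)) as [M HM]; [lra|].
  specialize (HM (max M N) ltac:(lia)). specialize (Hb (max M N) ltac:(lia)).
  unfold Rdist in HM. rewrite Rabs_minus_sym in HM.
  pose proof (Rabs_triang (l - u (max M N)) (u (max M N) - a)) as Ht.
  replace (l - u (max M N) + (u (max M N) - a)) with (l - a) in Ht by ring. lra.
Qed.

Fixpoint accum {T} (f : nat -> list T) (n : nat) : list T :=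
  match n with O => f O | S m => accum f m ++ f (S m) end.

Lemma accum_self {T} (f : nat -> list T) n x : In x (f n) -> In x (accum f n).
Proof. destruct n; simpl; auto. intro; apply in_or_app; auto. Qed.

Lemma accum_mono {T} (f : nat -> list T) n m x : (n <= m)%nat -> In x (accum f n) -> In x (accum f m).
Proof. induction 1; simpl; auto. intro; apply in_or_app; auto. Qed.

Lemma accum_inv {T} (f : nat -> list T) (P : T -> Prop) n :
  (forall k x, In x (f k) -> P x) -> forall x, In x (accum f n) -> P x.
Proof.
  intros H. induction n; simpl; intros x Hx; [eauto|].
  apply in_app_or in Hx as [Hx|Hx]; eauto.
Qed.

Section Summability.

Context {T : Type}.
Variable T_eq_dec : forall x y : T, {x = y} + {x <> y}.
Variable A : T -> Prop.
Variable g : T -> C.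

Let mass (F : list T) : R := rsum (fun x => l1norm (g x)) F.

Lemma Csum_near (G : list T) (eps : R) : NoDup G ->
  (forall F, NoDup F -> (forall x, In x F -> A x) -> (forall x, In x F -> ~ In x G) -> mass F <= eps) ->
  forall F, NoDup F -> (forall x, In x F -> A x) -> (forall x, In x G -> In x F) ->
    Rabs (fst (Csum g F) - fst (Csum g G)) <= eps /\ Rabs (snd (Csum g F) - snd (Csum g G)) <= eps.
Proof.
  intros HG Htail F HF HFA HGF.
  destruct (Csum_split T_eq_dec A g F G) as [Rl [HR1 [HR2 [HR3 ->]]]]; auto.
  pose proof (Htail Rl HR1 HR2 HR3) as K. pose proof (l1norm_Csum g Rl) as K2.
  unfold mass, l1norm, Cadd in *; simpl.
  replace (fst (Csum g G) + fst (Csum g Rl) - fst (Csum g G)) with (fst (Csum g Rl)) by ring.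
  replace (snd (Csum g G) + snd (Csum g Rl) - snd (Csum g G)) with (snd (Csum g Rl)) by ring.
  pose proof (Rabs_pos (fst (Csum g Rl))). pose proof (Rabs_pos (snd (Csum g Rl))). lra.
Qed.

Lemma usum_cauchy (B : nat -> list T) (Tb : nat -> R) :
  (forall n, NoDup (B n)) -> (forall n x, In x (B n) -> A x) ->
  (forall n m, (n <= m)%nat -> forall x, In x (B n) -> In x (B m)) ->
  (forall n F, NoDup F -> (forall x, In x F -> A x) -> (forall x, In x F -> ~ In x (B n)) ->
     mass F <= Tb n) ->
  (forall eps, 0 < eps -> exists n, Tb n < eps) -> exists S, has_usum A g S.
Proof.
  intros HND HA Hmono Htail Hlim.
  pose proof (fun N => Csum_near (B N) (Tb N) (HND N) (Htail N)) as Hclose.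
  set (u := fun n => fst (Csum g (B n))). set (v := fun n => snd (Csum g (B n))).
  assert (Hc : forall N n, (N <= n)%nat -> Rabs (u n - u N) <= Tb N /\ Rabs (v n - v N) <= Tb N).
  { intros N n HNn. apply Hclose; [apply HND | intros; eapply HA; eauto | apply Hmono; auto]. }
  assert (Hcauchy : forall w : nat -> R, (forall N n, (N <= n)%nat -> Rabs (w n - w N) <= Tb N) ->
            Cauchy_crit w).
  { intros w Hw eps Heps. destruct (Hlim (eps / 2)) as [N HN]; [lra|]. exists N.
    intros n m Hn Hm. unfold Rdist.
    pose proof (Hw N n Hn). pose proof (Hw N m Hm).
    pose proof (Rabs_triang (w n - w N) (w N - w m)) as Ht. rewrite (Rabs_minus_sym (w N)) in Ht.
    replace (w n - w N + (w N - w m)) with (w n - w m) in Ht by ring. lra. }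
  destruct (R_complete u (Hcauchy u (fun N n H => proj1 (Hc N n H)))) as [lu Hlu].
  destruct (R_complete v (Hcauchy v (fun N n H => proj2 (Hc N n H)))) as [lv Hlv].
  exists (lu, lv). intros eps Heps.
  destruct (Hlim (eps / 4)) as [N HN]; [lra|].
  assert (E1 : Rabs (lu - u N) <= Tb N) by (apply (lim_bound u lu N); auto; intros; apply Hc; auto).
  assert (E2 : Rabs (lv - v N) <= Tb N) by (apply (lim_bound v lv N); auto; intros; apply Hc; auto).
  exists (B N). split; [intros; eapply HA; eauto|].
  intros F HF HFA HF0. destruct (Hclose N F HF HFA HF0) as [K1 K2].
  eapply Rle_lt_trans; [apply Cnorm_le_l1norm|]. unfold l1norm, Csub; simpl. fold (u N) (v N) in K1, K2.
  pose proof (Rabs_triang (fst (Csum g F) - u N) (u N - lu)).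
  pose proof (Rabs_triang (snd (Csum g F) - v N) (v N - lv)).
  replace (fst (Csum g F) - u N + (u N - lu)) with (fst (Csum g F) - lu) in * by ring.
  replace (snd (Csum g F) - v N + (v N - lv)) with (snd (Csum g F) - lv) in * by ring.
  rewrite (Rabs_minus_sym (u N)) in *. rewrite (Rabs_minus_sym (v N)) in *. lra.
Qed.

Lemma usum_of_bounded_mass (M : R) :
  (forall F, NoDup F -> (forall x, In x F -> A x) -> mass F <= M) -> exists S, has_usum A g S.
Proof.
  intro Hbd.
  set (P := fun y => exists F, NoDup F /\ (forall x, In x F -> A x) /\ y = mass F).
  destruct (completeness P) as [sig [Hub Hlub]].
  { exists M. intros y [F [HF [HFA ->]]]. auto. }
  { exists 0, nil. split; [constructor|]. split; [intros x []|reflexivity]. }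
  assert (Happrox : forall n : nat, exists F, (NoDup F /\ forall x, In x F -> A x) /\
                      sig - / INR (S n) < mass F).
  { intro n. apply NNPP. intro Hno.
    assert (Hpos : 0 < / INR (S n)) by (apply Rinv_0_lt_compat, lt_0_INR; lia).
    assert (sig <= sig - / INR (S n)); [|lra].
    apply Hlub. intros y [F [HF [HFA ->]]]. apply Rnot_lt_le. intro Hlt. apply Hno. eauto. }
  set (Fn := fun n => proj1_sig (constructive_indefinite_description _ (Happrox n))).
  assert (HFn : forall n, (NoDup (Fn n) /\ forall x, In x (Fn n) -> A x) /\
                    sig - / INR (S n) < mass (Fn n)).
  { intro n. exact (proj2_sig (constructive_indefinite_description _ (Happrox n))). }
  set (B := fun n => nodup T_eq_dec (accum Fn n)).
  assert (HBA : forall n x, In x (B n) -> A x).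
  { intros n x Hx. apply nodup_In in Hx. apply (accum_inv Fn A n); auto.
    intros k y Hy. apply (proj2 (proj1 (HFn k))); auto. }
  apply (usum_cauchy B (fun n => / INR (S n))); [intros; apply NoDup_nodup | exact HBA | | |].
  - intros n m Hnm x Hx. apply nodup_In in Hx. apply nodup_In. eapply accum_mono; eauto.
  - intros n F HF HFA Hdis.
    assert (Hsum : mass F + mass (B n) <= sig).
    { unfold mass. rewrite <- rsum_app. apply Hub. exists (F ++ B n). split; [|split; auto].
      - apply NoDup_app; [exact HF | apply NoDup_nodup | intros x Hx HxB; exact (Hdis x Hx HxB)].
      - intros x Hx. apply in_app_or in Hx as [Hx|Hx]; eauto. }
    assert (Hmono : mass (Fn n) <= mass (B n)).
    { apply rsum_incl; [exact T_eq_dec | intro; apply l1norm_nonneg | apply HFn |].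
      intros x Hx. apply nodup_In, accum_self; auto. }
    pose proof (proj2 (HFn n)). lra.
  - intros eps Heps. destruct (archimed_cor1 eps Heps) as [n [Hn Hn0]].
    exists n. eapply Rle_lt_trans; [|exact Hn].
    apply Rinv_le_contravar; [apply lt_0_INR; lia|]. apply le_INR; lia.
Qed.

End Summability.

Lemma Cpow_pos_mult a b w : 0 < a -> 0 < b ->
  Cpow_pos (a * b) w = Cmul (Cpow_pos a w) (Cpow_pos b w).
Proof.
  intros Ha Hb. unfold Cpow_pos, Cmul; simpl. rewrite ln_mult by auto.
  rewrite !Rmult_plus_distr_l, exp_plus, cos_plus, sin_plus. f_equal; ring.
Qed.

Lemma Cpow_inv a s : 0 < a -> Cpow_pos (/ a) s = Cpow_pos a (Copp s).
Proof. intro Ha. unfold Cpow_pos, Copp; simpl. rewrite ln_Rinv by auto. f_equal; f_equal; f_equal; ring. Qed.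

Lemma Cpow_real a x : Cpow_pos a (x, 0) = (exp (x * ln a), 0).
Proof. unfold Cpow_pos; simpl. rewrite Rmult_0_l, cos_0, sin_0. f_equal; ring. Qed.

Lemma rpow_le_1 a s : 0 < a <= 1 -> 0 < s -> exp (s * ln a) <= 1.
Proof.
  intros [Ha [Hlt| ->]] Hs.
  - rewrite <- exp_0. apply Rlt_le, exp_increasing.
    assert (ln a < 0) by (rewrite <- ln_1; apply ln_increasing; lra). nra.
  - rewrite ln_1, Rmult_0_r, exp_0. lra.
Qed.

Lemma Cpow_l1norm a w : l1norm (Cpow_pos a w) <= 2 * exp (fst w * ln a).
Proof.
  unfold l1norm, Cpow_pos; simpl.
  rewrite !Rabs_mult, (Rabs_right (exp _)) by (apply Rle_ge, Rlt_le, exp_pos).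
  pose proof (exp_pos (fst w * ln a)).
  assert (Rabs (cos (snd w * ln a)) <= 1) by (apply Rabs_le, COS_bound).
  assert (Rabs (sin (snd w * ln a)) <= 1) by (apply Rabs_le, SIN_bound).
  nra.
Qed.

(** * Convergence of sum' Q(x,y)^(-s) for Re s > 1 *)

Definition weight (sg : R) (k : nat) : R := exp (- sg * ln (1 + INR k)).

Lemma weight_pos sg k : 0 < weight sg k.
Proof. apply exp_pos. Qed.

Lemma weight_0 sg : weight sg 0 = 1.
Proof. unfold weight. simpl. rewrite Rplus_0_r, ln_1, Rmult_0_r, exp_0. reflexivity. Qed.

Lemma ln_le_sub1 y : 0 < y -> ln y <= y - 1.
Proof. intro Hy. pose proof (exp_ineq1_le (ln y)) as H. rewrite exp_ln in H; lra. Qed.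

(** Integral comparison: j^(-(1+d)) <= ((j-1)^(-d) - j^(-d)) / d for j >= 2, d > 0. *)
Lemma power_telescope (j d : R) : 2 <= j -> 0 < d ->
  exp (- (1 + d) * ln j) <= (1 / d) * (exp (- d * ln (j - 1)) - exp (- d * ln j)).
Proof.
  intros Hj Hd. set (a := ln j). set (b := ln (j - 1)).
  assert (Hab : 1 / j <= a - b).
  { assert (E : ln ((j - 1) * / j) = b - a).
    { rewrite ln_mult, ln_Rinv; try lra; [unfold a, b; ring | apply Rinv_0_lt_compat; lra]. }
    pose proof (ln_le_sub1 ((j - 1) * / j)) as H. rewrite E in H.
    assert (E' : (j - 1) * / j - 1 = - (1 / j)) by (field; lra). rewrite E' in H.
    enough (b - a <= - (1 / j)) by lra. apply H, Rmult_lt_0_compat; [lra | apply Rinv_0_lt_compat; lra]. }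
  assert (E1 : exp (- d * b) = exp (- d * a) * exp (d * (a - b))) by (rewrite <- exp_plus; f_equal; ring).
  assert (E2 : exp (- (1 + d) * a) = exp (- d * a) * / j).
  { replace (- (1 + d) * a) with (- d * a + - a) by ring.
    rewrite exp_plus, exp_Ropp. unfold a. rewrite exp_ln by lra. reflexivity. }
  pose proof (exp_ineq1_le (d * (a - b))).
  assert (Hp : 0 < exp (- d * a)) by apply exp_pos.
  rewrite E1, E2.
  assert (d * (1 / j) <= d * (a - b)) by (apply Rmult_le_compat_l; lra).
  assert (K : exp (- d * a) * (d * / j) <= exp (- d * a) * (exp (d * (a - b)) - 1)).
  { apply Rmult_le_compat_l; [lra|]. unfold Rdiv in *. lra. }
  replace (exp (- d * a) * / j) with ((1 / d) * (exp (- d * a) * (d * / j))) by (field; lra).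
  replace (exp (- d * a) * exp (d * (a - b)) - exp (- d * a))
    with (exp (- d * a) * (exp (d * (a - b)) - 1)) by ring.
  apply Rmult_le_compat_l; [|exact K]. apply Rlt_le, Rdiv_lt_0_compat; lra.
Qed.

Lemma weight_tail sg (Hsg : 1 < sg) n m :
  rsum (weight sg) (seq (S n) m) <= (1 / (sg - 1)) * (weight (sg - 1) n - weight (sg - 1) (n + m)).
Proof.
  revert n. induction m; intro n; simpl.
  - rewrite Nat.add_0_r. lra.
  - assert (Hstep : weight sg (S n) <= (1 / (sg - 1)) * (weight (sg - 1) n - weight (sg - 1) (S n))).
    { unfold weight. rewrite S_INR.
      pose proof (power_telescope (1 + (INR n + 1)) (sg - 1)) as K.
      replace (1 + (INR n + 1) - 1) with (1 + INR n) in K by ring.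
      replace (- (1 + (sg - 1))) with (- sg) in K by ring.
      apply K; [pose proof (pos_INR n); lra | lra]. }
    pose proof (IHm (S n)) as H. replace (S n + m)%nat with (n + S m)%nat in H by lia. lra.
Qed.

Definition zrange (K : nat) : list Z :=
  map (fun i => (- Z.of_nat i)%Z) (seq 1 K) ++ 0%Z :: map Z.of_nat (seq 1 K).

Lemma zrange_in x K : (Z.abs x <= Z.of_nat K)%Z -> In x (zrange K).
Proof.
  intro H. unfold zrange. rewrite in_app_iff. simpl. rewrite !in_map_iff.
  destruct (Z.lt_trichotomy x 0) as [Hx|[Hx|Hx]].
  - left. exists (Z.to_nat (- x)). split; [lia|]. apply in_seq. lia.
  - right; left; auto.
  - right; right. exists (Z.to_nat x). split; [lia|]. apply in_seq. lia.
Qed.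

Definition zweight (sg : R) (x : Z) : R := weight sg (Z.abs_nat x).

Lemma zweight_sum sg (Hsg : 1 < sg) K : rsum (zweight sg) (zrange K) <= 1 + 2 / (sg - 1).
Proof.
  unfold zrange. rewrite rsum_app. simpl.
  assert (Hmap : forall (h : nat -> Z), (forall i, Z.abs_nat (h i) = i) ->
            rsum (zweight sg) (map h (seq 1 K)) = rsum (weight sg) (seq 1 K)).
  { intros h Hh. rewrite rsum_map. apply rsum_ext. intros i _. unfold zweight. rewrite Hh. reflexivity. }
  rewrite !Hmap by (intro; lia).
  unfold zweight. rewrite Zabs2Nat.inj_0, weight_0.
  pose proof (weight_tail sg Hsg 0 K) as H. rewrite weight_0 in H.
  pose proof (weight_pos (sg - 1) (0 + K)).
  assert (0 < 1 / (sg - 1)) by (apply Rdiv_lt_0_compat; lra).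
  assert (1 / (sg - 1) * (1 - weight (sg - 1) (0 + K)) <= 1 / (sg - 1)) by nra.
  unfold Rdiv in *. lra.
Qed.

Lemma rsum_prod sg (l1 l2 : list Z) :
  rsum (fun z => zweight sg (fst z) * zweight sg (snd z)) (list_prod l1 l2)
  = rsum (zweight sg) l1 * rsum (zweight sg) l2.
Proof.
  induction l1; simpl; [ring|]. rewrite rsum_app, IHl1, rsum_map. simpl.
  rewrite (rsum_scal (zweight sg)). ring.
Qed.

Lemma list_box (F : list (Z * Z)) : exists K : nat, forall z, In z F ->
  (Z.abs (fst z) <= Z.of_nat K)%Z /\ (Z.abs (snd z) <= Z.of_nat K)%Z.
Proof.
  induction F as [|[x y] F [K HK]].
  - exists 0%nat. intros z [].
  - exists (max K (Z.to_nat (Z.max (Z.abs x) (Z.abs y)))). intros z [<-|Hz]; simpl; [lia|].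
    destruct (HK z Hz). lia.
Qed.

Lemma int_weight_bound (x y : Z) : (x, y) <> (0%Z, 0%Z) ->
  ((1 + Z.abs x) * (1 + Z.abs y) <= 4 * (x * x + y * y))%Z.
Proof.
  intro H. assert (x <> 0 \/ y <> 0)%Z
    by (destruct (Z.eq_dec x 0) as [->|]; destruct (Z.eq_dec y 0) as [->|]; auto).
  destruct (Z.abs_spec x) as [[? ->]|[? ->]]; destruct (Z.abs_spec y) as [[? ->]|[? ->]]; nia.
Qed.

Lemma term_bound (s : C) (Qv : R) (x y : Z) : 1 < fst s -> (x, y) <> (0%Z, 0%Z) ->
  IZR x ^ 2 + IZR y ^ 2 <= Qv ->
  l1norm (Cpow_pos Qv (Copp s)) <= 2 * exp (fst s * ln 4) * (zweight (fst s) x * zweight (fst s) y).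
Proof.
  intros Hs Hxy HQ. eapply Rle_trans; [apply Cpow_l1norm|].
  unfold Copp; simpl fst. set (sg := fst s).
  set (X := 1 + INR (Z.abs_nat x)). set (Y := 1 + INR (Z.abs_nat y)).
  assert (HX : 1 <= X) by (unfold X; pose proof (pos_INR (Z.abs_nat x)); lra).
  assert (HY : 1 <= Y) by (unfold Y; pose proof (pos_INR (Z.abs_nat y)); lra).
  assert (HP : X * Y / 4 <= Qv).
  { assert (EX : X = 1 + Rabs (IZR x)) by (unfold X; rewrite INR_IZR_INZ, Zabs2Nat.id_abs, abs_IZR; reflexivity).
    assert (EY : Y = 1 + Rabs (IZR y)) by (unfold Y; rewrite INR_IZR_INZ, Zabs2Nat.id_abs, abs_IZR; reflexivity).
    apply int_weight_bound, IZR_le in Hxy.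
    rewrite !mult_IZR, !plus_IZR, !mult_IZR, !abs_IZR in Hxy.
    replace (IZR x ^ 2 + IZR y ^ 2) with (IZR x * IZR x + IZR y * IZR y) in HQ by ring.
    rewrite EX, EY. lra. }
  assert (HP0 : 0 < X * Y / 4) by nra.
  assert (Hln : ln (X * Y / 4) <= ln Qv).
  { destruct (Req_dec (X * Y / 4) Qv) as [<-|Hne]; [lra|]. apply Rlt_le, ln_increasing; lra. }
  assert (E : ln (X * Y / 4) = ln X + ln Y - ln 4).
  { unfold Rdiv. rewrite ln_mult, ln_mult, ln_Rinv; lra. }
  assert (K : exp (- sg * ln Qv) <= exp (- sg * ln (X * Y / 4))).
  { destruct (Req_dec (ln (X * Y / 4)) (ln Qv)) as [E'|E']; [rewrite E'; lra|].
    apply Rlt_le, exp_increasing. unfold sg in *. nra. }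
  assert (E2 : exp (- sg * ln (X * Y / 4)) = exp (sg * ln 4) * (zweight sg x * zweight sg y)).
  { unfold zweight, weight. fold X Y. rewrite E, <- !exp_plus. f_equal. ring. }
  lra.
Qed.

Definition Zpair_eq_dec (x y : Z * Z) : {x = y} + {x <> y}.
Proof. decide equality; apply Z.eq_dec. Defined.

Lemma Zpair_sum_converges (Qf : Z -> Z -> R) (s : C) : 1 < fst s ->
  (forall x y, (x, y) <> (0%Z, 0%Z) -> IZR x ^ 2 + IZR y ^ 2 <= Qf x y) ->
  exists S, has_usum (fun z : Z * Z => z <> (0%Z, 0%Z))
                     (fun z => Cpow_pos (Qf (fst z) (snd z)) (Copp s)) S.
Proof.
  intros Hs HQ. set (sg := fst s). set (Kc := 2 * exp (sg * ln 4)).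
  assert (HKc : 0 < Kc) by (unfold Kc; pose proof (exp_pos (sg * ln 4)); lra).
  set (W := fun z : Z * Z => zweight sg (fst z) * zweight sg (snd z)).
  apply (usum_of_bounded_mass Zpair_eq_dec _ _ (Kc * ((1 + 2 / (sg - 1)) * (1 + 2 / (sg - 1))))).
  intros F HF HFA. destruct (list_box F) as [K HK].
  eapply Rle_trans; [apply (rsum_le _ (fun z => Kc * W z)) |].
  { intros [x y] Hz. apply term_bound; auto. }
  rewrite rsum_scal. apply Rmult_le_compat_l; [lra|].
  eapply Rle_trans; [apply (rsum_incl Zpair_eq_dec W F (list_prod (zrange K) (zrange K)))|].
  - intro z. unfold W. apply Rmult_le_pos; apply Rlt_le, weight_pos.
  - exact HF.
  - intros z Hz. destruct (HK z Hz). destruct z. apply in_prod; apply zrange_in; auto.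
  - unfold W. rewrite rsum_prod.
    assert (0 <= rsum (zweight sg) (zrange K)) by (apply rsum_nonneg; intro; apply Rlt_le, weight_pos).
    pose proof (zweight_sum sg Hs K). apply Rmult_le_compat; auto.
Qed.

Definition coord_map (u v : vec) (z : Z * Z) : vec :=
  vadd (vscale (IZR (fst z)) u) (vscale (IZR (snd z)) v).

Lemma coord_map_inj u v z1 z2 : det2 u v <> 0 -> coord_map u v z1 = coord_map u v z2 -> z1 = z2.
Proof.
  intros D E. destruct z1 as [x1 y1], z2 as [x2 y2].
  unfold coord_map, vadd, vscale in E; simpl in E. injection E; intros E2 E1.
  set (a := IZR x1 - IZR x2). set (b := IZR y1 - IZR y2).
  assert (F1 : a * fst u + b * fst v = 0) by (unfold a, b; lra).
  assert (F2 : a * snd u + b * snd v = 0) by (unfold a, b; lra).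
  assert (Hx : a * det2 u v = 0).
  { replace (a * det2 u v) with (snd v * (a * fst u + b * fst v) - fst v * (a * snd u + b * snd v))
      by (unfold det2; ring). rewrite F1, F2. ring. }
  assert (Hy : b * det2 u v = 0).
  { replace (b * det2 u v) with (fst u * (a * snd u + b * snd v) - snd u * (a * fst u + b * fst v))
      by (unfold det2; ring). rewrite F1, F2. ring. }
  apply Rmult_integral in Hx as [Hx|]; [|contradiction].
  apply Rmult_integral in Hy as [Hy|]; [|contradiction].
  unfold a, b in *. f_equal; apply eq_IZR; lra.
Qed.

Lemma usum_over_basis L u v (g : vec -> C) S : is_basis L u v ->
  has_usum (fun z : Z * Z => z <> (0%Z, 0%Z)) (fun z => g (coord_map u v z)) S ->
  has_usum (fun w => L w /\ w <> v0) g S.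
Proof.
  intros [D HB]. apply usum_reindex with (phi := coord_map u v).
  - intros z1 z2 _ _. apply coord_map_inj; auto.
  - intros z Hz. split; [apply HB; exists (fst z), (snd z); reflexivity|].
    intro E. apply Hz, (coord_map_inj u v); auto. rewrite E.
    apply vec_eq; unfold coord_map, v0, vadd, vscale; simpl; ring.
  - intros w [Lw Hw]. apply HB in Lw as [m [n ->]]. exists (m, n). split; [|reflexivity].
    intro E. injection E; intros -> ->. apply Hw, vec_eq; unfold vadd, vscale, v0; simpl; ring.
  - reflexivity.
Qed.

(** The arithmetic data attached to p/q in S: the primitive Pythagorean triple
    (p, r, q) with r = sqrt (q^2 - p^2), and 2 r <= q, i.e. the angle is >= pi/3. *)
Definition pyth_data (p q r : nat) : Prop :=
  (r * r + p * p = q * q)%nat /\ Nat.gcd p q = 1%nat /\ (0 < q)%nat /\ (0 < p)%nat /\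
  (2 * r <= q)%nat.

Lemma in_S_pyth_data p q : in_S p q -> exists r, pyth_data p q r.
Proof.
  intros [[-> ->]|[Hq [Hg [[r Hr] [H1 H2]]]]].
  - exists 0%nat. repeat split; auto.
  - exists r. assert (Hq' : 0 < INR q) by (apply lt_0_INR; auto).
    assert (Hs3 : 0 < sqrt 3) by (apply sqrt_lt_R0; lra).
    assert (E3 : sqrt 3 * sqrt 3 = 3) by (apply sqrt_sqrt; lra).
    assert (Hpq : sqrt 3 / 2 * INR q < INR p).
    { replace (INR p) with (INR p / INR q * INR q) by (field; lra). nra. }
    assert (Hp : (0 < p)%nat) by (apply INR_lt; simpl; nra).
    (* sqrt 3 / 2 < p / q means 3 q^2 < 4 p^2, which with r^2 = q^2 - p^2 gives 2 r < q *)
    assert (H4 : 3 * INR q * INR q < 4 * INR p * INR p).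
    { assert (Ha : 0 <= sqrt 3 / 2 * INR q) by nra.
      assert (Hsq : (sqrt 3 / 2 * INR q) * (sqrt 3 / 2 * INR q) < INR p * INR p) by nra.
      replace ((sqrt 3 / 2 * INR q) * (sqrt 3 / 2 * INR q))
        with (sqrt 3 * sqrt 3 / 4 * INR q * INR q) in Hsq by field.
      rewrite E3 in Hsq. lra. }
    assert (H5 : (3 * q * q < 4 * p * p)%nat) by (apply INR_lt; rewrite !mult_INR; simpl; lra).
    repeat split; auto. nia.
Qed.

Lemma sqrt_q2_p2 p q r : pyth_data p q r -> sqrt (INR q ^ 2 - INR p ^ 2) = INR r.
Proof.
  intros [H _]. replace (INR q ^ 2 - INR p ^ 2) with (INR r ^ 2).
  - apply sqrt_pow2, pos_INR.
  - apply (f_equal INR) in H. rewrite !plus_INR, !mult_INR in H. simpl. nra.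
Qed.

Lemma minimal_acute_basis L : well_rounded L -> sub_Z2 L ->
  exists u v, is_basis L u v /\ minimal_vec L u /\ minimal_vec L v /\ 0 <= dot u v.
Proof.
  intros [HL [u [v [Mu [Mv Duv]]]]] HZ.
  assert (Hmin : is_min_norm L (lat_min L)).
  { apply lat_min_spec, min_exists_Z2; auto. exists u. destruct Mu as [? [? ?]]; auto. }
  assert (Hw : exists w, minimal_vec L w /\ det2 u w <> 0 /\ 0 <= dot u w).
  { destruct (Rle_lt_dec 0 (dot u v)).
    - exists v. auto.
    - exists (vscale (-1) v). destruct Mv as [Lv [Nv Ev]].
      split; [split; [|split]|split].
      + apply lattice_neg; auto.
      + intro E. apply Nv. apply vec_eq; unfold vscale, v0 in *; injection E; simpl; intros; lra.
      + rewrite <- Ev. unfold norm, norm2, vscale; simpl. f_equal. ring.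
      + unfold det2, vscale in *; simpl. intro E; apply Duv. lra.
      + unfold dot, vscale in *; simpl in *. lra. }
  destruct Hw as [w [Mw [Dw Pw]]]. exists u, w. split; [|auto].
  destruct Mu as [Lu [_ Nu]]. destruct Mw as [Lw [_ Nw]]. eapply minimal_pair_basis; eauto.
Qed.

Lemma sin_theta_basis L u v : is_basis L u v -> minimal_vec L u ->
  sin_theta L = Rabs (det2 u v) / norm2 u.
Proof.
  intros Hb [_ [_ Nu]]. unfold sin_theta. rewrite (lat_det_basis L u v Hb), <- Nu.
  unfold norm. simpl. rewrite Rmult_1_r, sqrt_sqrt by apply norm2_nonneg. reflexivity.
Qed.

(** * Structure of the class C(p,q) *)

Section ClassCpq.

Variables p q r : nat.
Hypothesis Hdata : pyth_data p q r.

Definition scaled_gram (L : vec -> Prop) (u v : vec) (t : R) : Prop :=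
  is_basis L u v /\ minimal_vec L u /\ minimal_vec L v /\
  norm2 u = INR q * t /\ norm2 v = INR q * t /\ dot u v = INR r * t.

Lemma scaled_gram_det L u v t : 0 <= t -> scaled_gram L u v t -> lat_det L = INR p * t.
Proof.
  intros Ht [Hb [_ [_ [Nu [Nv Duv]]]]]. rewrite (lat_det_basis L u v Hb).
  pose proof (lagrange_identity u v) as HL. rewrite Nu, Nv, Duv in HL.
  destruct Hdata as [Hpy _]. apply (f_equal INR) in Hpy. rewrite !plus_INR, !mult_INR in Hpy.
  assert (Hdd : Rabs (det2 u v) * Rabs (det2 u v) = (INR p * t) * (INR p * t)).
  { rewrite <- Rabs_mult, Rabs_right by (apply Rle_ge, Rle_0_sqr). nra. }
  pose proof (Rabs_pos (det2 u v)). pose proof (pos_INR p).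
  assert (0 <= INR p * t) by nra. nra.
Qed.

Lemma scaled_gram_min L u v t : scaled_gram L u v t -> lat_min L = sqrt (INR q * t).
Proof. intros [_ [[_ [_ Nu]] [_ [Eu _]]]]. rewrite <- Nu, <- Eu. reflexivity. Qed.

Lemma Cpq_structure L : C_pq p q L ->
  exists u v (t : Z), (1 <= t)%Z /\ intvec u /\ intvec v /\ scaled_gram L u v (IZR t).
Proof.
  intros [[HW HZ] Hsin]. pose proof Hdata as [Hpy [Hg [Hq [Hp Hr]]]].
  destruct (minimal_acute_basis L HW HZ) as [u [v [Hb [Mu [Mv Dpos]]]]].
  pose proof (sin_theta_basis L u v Hb Mu) as Hs. rewrite Hsin in Hs.
  destruct (HZ u (proj1 Mu)) as [u1 [u2 Eu]]. destruct (HZ v (proj1 Mv)) as [v1 [v2 Ev]].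
  assert (NvN : norm2 v = norm2 u).
  { destruct Mu as [_ [_ Nu]]. destruct Mv as [_ [_ Nv]].
    apply sqrt_inj; try apply norm2_nonneg. unfold norm in *. congruence. }
  set (Nz := (u1 * u1 + u2 * u2)%Z). set (kz := (u1 * v2 - u2 * v1)%Z).
  assert (EN : norm2 u = IZR Nz) by (rewrite Eu; apply norm2_Z).
  assert (Ek : det2 u v = IZR kz).
  { rewrite Eu, Ev; unfold det2, kz; simpl. rewrite minus_IZR, !mult_IZR. ring. }
  assert (HN : (0 < Nz)%Z).
  { apply lt_IZR. rewrite <- EN. destruct (norm2_nonneg u) as [|E]; [auto|].
    exfalso. destruct Hb as [D _]. apply (det_nz_l u v D).
    unfold norm2 in E. apply vec_eq; unfold v0; simpl; nra. }
  assert (Hq' : 0 < INR q) by (apply lt_0_INR; auto).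
  (* sin theta = p/q reads |det| q = p |u|^2 in the integers *)
  assert (E1 : (Z.abs kz * Z.of_nat q = Z.of_nat p * Nz)%Z).
  { apply eq_IZR. rewrite !mult_IZR, abs_IZR, <- !INR_IZR_INZ, <- Ek, <- EN.
    assert (0 < norm2 u) by (rewrite EN; apply IZR_lt; auto).
    apply (f_equal (fun x => x * norm2 u * INR q)) in Hs. field_simplify in Hs; lra. }
  destruct (coprime_scaling (Z.of_nat p) (Z.of_nat q) kz Nz ltac:(lia) ltac:(lia) HN
              (nat_gcd_Z p q Hp Hg) E1) as [t [Ht [HNt Hkt]]].
  exists u, v, t. split; [exact Ht|]. split; [exists u1, u2; exact Eu|].
  split; [exists v1, v2; exact Ev|].
  assert (Et : norm2 u = INR q * IZR t) by (rewrite EN, HNt, mult_IZR, INR_IZR_INZ; ring).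
  unfold scaled_gram. rewrite NvN, Et. do 5 (split; [auto|]).
  (* Lagrange's identity gives (u.v)^2 = (q^2 - p^2) t^2 = (r t)^2 *)
  assert (Hdet : det2 u v * det2 u v = (INR p * IZR t) * (INR p * IZR t)).
  { assert (Hk2 : (kz * kz = (Z.of_nat p * t) * (Z.of_nat p * t))%Z).
    { rewrite <- Hkt. destruct (Z.abs_spec kz) as [[_ ->]|[_ ->]]; ring. }
    rewrite Ek, <- mult_IZR, Hk2, !mult_IZR, INR_IZR_INZ. reflexivity. }
  pose proof (lagrange_identity u v) as HL. rewrite Hdet, NvN, Et in HL.
  apply (f_equal INR) in Hpy. rewrite !plus_INR, !mult_INR in Hpy.
  assert (0 <= INR r * IZR t) by (apply Rmult_le_pos; [apply pos_INR | apply IZR_le; lia]).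
  nra.
Qed.


Lemma Qpq_gram x y : Qpq p q x y = x * x * INR q + y * y * INR q + 2 * x * y * INR r.
Proof. unfold Qpq. rewrite (sqrt_q2_p2 p q r Hdata). ring. Qed.

Lemma scaled_gram_norm_form L u v t x y : scaled_gram L u v t ->
  norm2 (vadd (vscale x u) (vscale y v)) = t * Qpq p q x y.
Proof. intros [_ [_ [_ [Nu [Nv Duv]]]]]. rewrite norm2_comb, Nu, Nv, Duv, Qpq_gram. ring. Qed.

(** Since 2 r <= q - 1, Q_{p,q}(x,y) >= x^2 + y^2. *)
Lemma Qpq_lower x y : x ^ 2 + y ^ 2 <= Qpq p q x y.
Proof.
  rewrite Qpq_gram. destruct Hdata as [_ [_ [Hq [_ Hr]]]].
  assert (Hqr : INR r + 1 <= INR q).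
  { replace (INR r + 1) with (INR (r + 1)) by (rewrite plus_INR; simpl; ring). apply le_INR. lia. }
  pose proof (pos_INR r). pose proof (pow2_ge_0 (x + y)).
  assert (INR r * (x + y) ^ 2 >= 0) by nra.
  assert ((INR q - 1 - INR r) * (x ^ 2 + y ^ 2) >= 0) by nra.
  nra.
Qed.

Lemma Q_sum_exists s : 1 < fst s -> exists F, Q_sum p q s F.
Proof.
  intro Hs. destruct (Zpair_sum_converges (fun x y => Qpq p q (IZR x) (IZR y)) s Hs) as [S HS].
  { intros x y _. apply Qpq_lower. }
  exists (Cmul (/ 2, 0) S). unfold Q_sum.
  replace (Cmul (2, 0) (Cmul (/ 2, 0) S)) with S; auto.
  destruct S; unfold Cmul; simpl; f_equal; field.
Qed.

Lemma Q_sum_real_nonneg s F : Q_sum p q (s, 0) F -> 0 <= fst F.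
Proof.
  intro H. apply (usum_fst_nonneg Zpair_eq_dec) in H.
  - unfold Cmul in H; simpl in H. lra.
  - intros z _. unfold Cpow_pos, Copp; simpl.
    replace (- 0 * ln (Qpq p q (IZR (fst z)) (IZR (snd z)))) with 0 by ring.
    rewrite cos_0, Rmult_1_r. apply Rlt_le, exp_pos.
Qed.

Lemma epstein_identity L s F : C_pq p q L -> 1 < fst s -> Q_sum p q s F ->
  epstein_sum L s (Cmul (Cpow_pos (INR p / lat_det L) s) F).
Proof.
  intros HL Hs HQ.
  destruct (Cpq_structure L HL) as [u [v [tz [Ht [_ [_ Hg]]]]]].
  set (t := IZR tz). assert (Ht' : 1 <= t) by (apply IZR_le; lia).
  pose proof Hdata as [_ [_ [_ [Hp _]]]]. assert (Hp' : 0 < INR p) by (apply lt_0_INR; auto).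
  set (c := Cpow_pos t (Copp s)).
  assert (Ec : Cpow_pos (INR p / lat_det L) s = c).
  { rewrite (scaled_gram_det L u v t) by (auto; lra).
    replace (INR p / (INR p * t)) with (/ t) by (field; lra). apply Cpow_inv. lra. }
  rewrite Ec. unfold epstein_sum.
  replace (Cmul (2, 0) (Cmul c F)) with (Cmul c (Cmul (2, 0) F))
    by (unfold Cmul; simpl; f_equal; ring).
  apply (usum_over_basis L u v); [apply Hg|].
  eapply (usum_reindex _ _ (fun z => z)); [intros ? ? _ _ E; exact E | intros z Hz; exact Hz |
    intros z Hz; exists z; auto | | apply usum_scale, HQ].
  intros [x y] Hz. unfold coord_map; cbn [fst snd]. rewrite (scaled_gram_norm_form L u v t) by exact Hg.
  assert (HQ0 : 0 < Qpq p q (IZR x) (IZR y)).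
  { eapply Rlt_le_trans; [|apply Qpq_lower].
    assert (Hxy : x <> 0%Z \/ y <> 0%Z)
      by (destruct (Z.eq_dec x 0) as [->|]; destruct (Z.eq_dec y 0) as [->|]; auto).
    destruct Hxy as [H|H]; apply not_0_IZR, Rsqr_pos_lt in H; unfold Rsqr in H;
      pose proof (pow2_ge_0 (IZR x)); pose proof (pow2_ge_0 (IZR y)); simpl in *; nra. }
  apply Cpow_pos_mult; lra.
Qed.

Lemma Cpq_lower_bounds L : C_pq p q L -> sqrt (INR q) <= lat_min L /\ INR p <= lat_det L.
Proof.
  intro HL. destruct (Cpq_structure L HL) as [u [v [t [Ht [_ [_ Hg]]]]]].
  apply IZR_le in Ht. pose proof Hdata as [_ [_ [Hq [Hp _]]]].
  pose proof (lt_0_INR q Hq). pose proof (lt_0_INR p Hp).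
  rewrite (scaled_gram_min L u v (IZR t) Hg), (scaled_gram_det L u v (IZR t)) by (auto; lra).
  split; [apply sqrt_le_1_alt|]; nra.
Qed.

Lemma Cpq_norm_form L : C_pq p q L ->
  exists c1 c2, minimal_basis L c1 c2 /\
    forall x y : R, norm2 (vadd (vscale x c1) (vscale y c2)) = lat_det L / INR p * Qpq p q x y.
Proof.
  intro HL. destruct (Cpq_structure L HL) as [u [v [t [Ht [_ [_ Hg]]]]]].
  pose proof Hdata as [_ [_ [_ [Hp _]]]]. pose proof (lt_0_INR p Hp).
  exists u, v. split; [destruct Hg as [? [? [? _]]]; split; [|split]; auto|].
  intros x y. rewrite (scaled_gram_norm_form L u v (IZR t)) by exact Hg.
  rewrite (scaled_gram_det L u v (IZR t)) by (auto; apply IZR_le; lia). field. lra.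
Qed.

Lemma Lambda_vectors : exists b1 b2 : vec, intvec b1 /\ intvec b2 /\
  norm2 b1 = INR q /\ norm2 b2 = INR q /\ dot b1 b2 = INR r.
Proof.
  destruct Hdata as [H1 [H2 [H3 [H4 H5]]]].
  destruct (pyth_gram_vectors (Z.of_nat p) (Z.of_nat q) (Z.of_nat r)) as [a1 [a2 [c1 [c2 [E1 [E2 E3]]]]]];
    try lia; [apply nat_gcd_Z; auto|].
  exists (IZR a1, IZR a2), (IZR c1, IZR c2).
  split; [eexists _, _; eauto|]. split; [eexists _, _; eauto|].
  rewrite !norm2_Z, E1, E2, <- !INR_IZR_INZ. split; [auto|]. split; [auto|].
  unfold dot; simpl. rewrite <- !mult_IZR, <- plus_IZR, E3, <- INR_IZR_INZ. reflexivity.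
Qed.

Section Lambda.

Variables b1 b2 : vec.
Hypotheses (Ib1 : intvec b1) (Ib2 : intvec b2)
  (Nb1 : norm2 b1 = INR q) (Nb2 : norm2 b2 = INR q) (Db : dot b1 b2 = INR r).

Definition Lambda : vec -> Prop :=
  fun w => exists m n : Z, w = vadd (vscale (IZR m) b1) (vscale (IZR n) b2).

Lemma Lambda_det_nz : det2 b1 b2 <> 0.
Proof.
  intro E. pose proof (lagrange_identity b1 b2) as HL. rewrite E, Nb1, Nb2, Db in HL.
  destruct Hdata as [Hpy [_ [_ [Hp _]]]]. apply (f_equal INR) in Hpy.
  rewrite !plus_INR, !mult_INR in Hpy. pose proof (lt_0_INR p Hp). nra.
Qed.

Lemma Lambda_basis : is_basis Lambda b1 b2.
Proof. split; [exact Lambda_det_nz | intro; reflexivity]. Qed.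

(** (b1, b2) is a reduced basis, hence |Lambda| = sqrt q and (b1, b2) is minimal. *)
Lemma Lambda_scaled_gram : scaled_gram Lambda b1 b2 1.
Proof.
  pose proof Hdata as [_ [_ [_ [_ Hr]]]].
  assert (Hmin : lat_min Lambda = sqrt (INR q)).
  { apply lat_min_eq, (reduced_basis_min _ b1 b2); auto; [apply Lambda_basis|].
    rewrite Db, Rabs_right by (apply Rle_ge, pos_INR).
    replace (2 * INR r) with (INR (2 * r)) by (rewrite mult_INR; reflexivity). apply le_INR; auto. }
  assert (Mb : forall b, Lambda b -> b <> v0 -> norm2 b = INR q -> minimal_vec Lambda b).
  { intros b Lb Hb Nb. split; [auto|]. split; [auto|]. unfold norm. rewrite Nb, Hmin. reflexivity. }
  split; [apply Lambda_basis|]. rewrite !Rmult_1_r.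
  split; [apply Mb; auto; [apply (basis_in1 _ _ b2), Lambda_basis | apply (det_nz_l _ b2), Lambda_det_nz]|].
  split; [apply Mb; auto; [apply (basis_in2 _ b1), Lambda_basis | apply (det_nz_r b1), Lambda_det_nz]|].
  auto.
Qed.

Lemma Lambda_det : lat_det Lambda = INR p.
Proof. rewrite (scaled_gram_det _ b1 b2 1), Rmult_1_r; [reflexivity | lra | apply Lambda_scaled_gram]. Qed.

Lemma Lambda_min : lat_min Lambda = sqrt (INR q).
Proof. rewrite (scaled_gram_min _ b1 b2 1), Rmult_1_r; [reflexivity | apply Lambda_scaled_gram]. Qed.

Lemma Lambda_in_Cpq : C_pq p q Lambda.
Proof.
  pose proof Lambda_scaled_gram as [Hb [M1 [M2 _]]].
  split; [split; [split|]|].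
  - exists b1, b2. exact Hb.
  - exists b1, b2. split; [|split]; auto. apply Lambda_det_nz.
  - intros v [m [n ->]]. destruct Ib1 as [a1 [a2 ->]]. destruct Ib2 as [c1 [c2 ->]].
    exists (m * a1 + n * c1)%Z, (m * a2 + n * c2)%Z. unfold vadd, vscale; simpl.
    rewrite !plus_IZR, !mult_IZR. reflexivity.
  - unfold sin_theta. rewrite Lambda_min, Lambda_det. simpl.
    rewrite Rmult_1_r, sqrt_sqrt; [reflexivity | apply pos_INR].
Qed.

Lemma Cpq_similar L : C_pq p q L ->
  exists U, orthogonal U /\ (lat_det L = INR p -> rational_mat U) /\
    forall v, L v <-> exists w, Lambda w /\ v = vscale (sqrt (lat_det L / INR p)) (mapply U w).
Proof.
  intro HL. destruct (Cpq_structure L HL) as [u [v [tz [Htz [Iu [Iv Hg]]]]]].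
  set (t := IZR tz). assert (Ht : 1 <= t) by (apply IZR_le; lia).
  pose proof Hdata as [_ [_ [_ [Hp _]]]]. pose proof (lt_0_INR p Hp).
  assert (Et : lat_det L / INR p = t) by (rewrite (scaled_gram_det L u v t) by (auto; lra); field; lra).
  assert (Hs0 : sqrt t <> 0) by (apply Rgt_not_eq, sqrt_lt_R0; lra).
  pose proof Hg as [Hb [_ [_ [Nu [Nv Duv]]]]].
  exists (transfer_mat b1 b2 u v (sqrt t)). split; [|split].
  - apply transfer_mat_orthogonal; [apply Lambda_det_nz | lra | | |];
      [rewrite Nu, Nb1 | rewrite Nv, Nb2 | rewrite Duv, Db]; unfold t; ring.
  - intro Hd1. assert (Ht1 : t = 1) by (rewrite <- Et, Hd1; field; lra).
    rewrite Ht1, sqrt_1. apply transfer_mat_rational; auto. apply Lambda_det_nz.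
  - intro w. rewrite Et. pose proof Hb as [_ HB]. rewrite HB. split.
    + intros [m [n ->]]. exists (vadd (vscale (IZR m) b1) (vscale (IZR n) b2)).
      split; [exists m, n; reflexivity|].
      rewrite transfer_mat_apply by (apply Lambda_det_nz || exact Hs0).
      apply vec_eq; unfold vscale, vadd; simpl; field; auto.
    + intros [w' [[m [n ->]] ->]]. exists m, n.
      rewrite transfer_mat_apply by (apply Lambda_det_nz || exact Hs0).
      apply vec_eq; unfold vscale, vadd; simpl; field; auto.
Qed.

(** (5) For real s > 1, Lambda maximises E_L(s) over C(p,q), as E_L(s) =
    (p / det L)^s E_Lambda(s) with p / det L <= 1. *)
Lemma Lambda_maximises_epstein (s : R) : 1 < s -> forall L, C_pq p q L -> forall E E0,
  epstein_sum L (s, 0) E -> epstein_sum Lambda (s, 0) E0 -> fst E <= fst E0.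
Proof.
  intros Hs L HL E E0 HE HE0.
  destruct (Q_sum_exists (s, 0) Hs) as [F HF].
  assert (Hval : forall L' E', C_pq p q L' -> epstein_sum L' (s, 0) E' ->
             E' = Cmul (Cpow_pos (INR p / lat_det L') (s, 0)) F).
  { intros L' E' HL' HE'. pose proof (epstein_identity L' (s, 0) F HL' Hs HF) as K.
    unfold epstein_sum in *. pose proof (usum_unique vec_eq_dec _ _ _ _ HE' K) as X.
    destruct E', (Cmul (Cpow_pos _ _) F). unfold Cmul in X; simpl in X.
    injection X; intros; f_equal; lra. }
  rewrite (Hval L E HL HE), (Hval Lambda E0 Lambda_in_Cpq HE0), Lambda_det, !Cpow_real.
  pose proof (Q_sum_real_nonneg s F HF). unfold Cmul; simpl.
  pose proof Hdata as [_ [_ [_ [Hp _]]]]. pose proof (lt_0_INR p Hp).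
  pose proof (proj2 (Cpq_lower_bounds L HL)).
  assert (Hratio : 0 < INR p / lat_det L <= 1)
    by (split; [apply Rdiv_lt_0_compat | apply Rmult_le_reg_r with (lat_det L); field_simplify]; lra).
  pose proof (rpow_le_1 _ s Hratio ltac:(lra)).
  replace (INR p / INR p) with 1 by (field; lra). rewrite ln_1, Rmult_0_r, exp_0.
  nra.
Qed.

Lemma Lambda_thm_props : thm_props p q Lambda.
Proof.
  split; [exact Lambda_in_Cpq|].
  split; [split; [exact Lambda_min | intros L HL; apply Cpq_lower_bounds, HL]|].
  split; [split; [exact Lambda_det | intros L HL; apply Cpq_lower_bounds, HL]|].
  split.
  { exists b1, b2. pose proof Lambda_scaled_gram as Hg. split.
    - destruct Hg as [? [? [? _]]]. split; [|split]; auto.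
    - intros x y. rewrite (scaled_gram_norm_form _ b1 b2 1 x y Hg). ring. }
  split.
  { intros L HL. split; [|apply Cpq_norm_form, HL].
    destruct (Cpq_similar L HL) as [U [HU [_ HLU]]]. eauto. }
  split; [|exact Lambda_maximises_epstein].
  intros L HL s Hs. destruct (Q_sum_exists s Hs) as [F HF].
  exists (Cmul (Cpow_pos (INR p / lat_det L) s) F), F.
  split; [apply epstein_identity|]; auto.
Qed.

Lemma thm_props_rigid L1 : thm_props p q L1 ->
  exists U, orthogonal U /\ rational_mat U /\ forall v, L1 v <-> exists w, Lambda w /\ v = mapply U w.
Proof.
  intros [HC1 [_ [[Hd1 _] _]]].
  destruct (Cpq_similar L1 HC1) as [U [HU [HR HL1]]].
  pose proof Hdata as [_ [_ [_ [Hp _]]]]. pose proof (lt_0_INR p Hp).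
  exists U. split; [exact HU|]. split; [apply HR, Hd1|].
  intro v. rewrite HL1, Hd1. replace (INR p / INR p) with 1 by (field; lra). rewrite sqrt_1.
  split; intros [w [Hw ->]]; exists w; split; auto;
    unfold vscale; destruct (mapply U w); simpl; f_equal; ring.
Qed.

End Lambda.

End ClassCpq.

Theorem theorem1p3 (p q : nat) (HS : in_S p q) :
  exists L0 : vec -> Prop,
    thm_props p q L0 /\
    (forall L1 : vec -> Prop, thm_props p q L1 ->
       exists U : mat2, orthogonal U /\ rational_mat U /\
         forall v, L1 v <-> exists w, L0 w /\ v = mapply U w).
Proof.
  destruct (in_S_pyth_data p q HS) as [r Hdata].
  destruct (Lambda_vectors p q r Hdata) as [b1 [b2 [Ib1 [Ib2 [Nb1 [Nb2 Db]]]]]].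
  exists (Lambda b1 b2). split.
  - apply (Lambda_thm_props p q r); auto.
  - intros L1 H1. apply (thm_props_rigid p q r); auto.
Qed.
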